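(* On $[c,d]=[2,6]$ let $p(x)=1+x^3$ and $q(x)=\lfloor x\rfloor$ (integer part). Then the problem $$x^3V''(x)^2+p(x)x^2V''(x)+q(x)\big(xV'(x)-V(x)\big)=0\ \text{ a.e. on }[2,6],\qquad V(2)=9,\ V(6)=1,$$ has extremal convex solutions in the functional interval $\big[\max\{\tfrac{x}{6},\,6x^2-50x+85\},\ 13-2x\big]$.
   Context: A solution is a $V\in C^1([2,6])$ with $V'$ absolutely continuous satisfying the equation a.e. and the boundary conditions. For functions $a\le b$, $[a,b]$ denotes the set of functions $V$ with $a(x)\le V(x)\le b(x)$ for all $x$. ''Extremal convex solutions in $[a,b]$'' means: there exist convex solutions $V_*,V^*\in[a,b]$ such that every convex solution $V\in[a,b]$ satisfies $V_*\le V\le V^*$. *)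

From Stdlib Require Import Reals Lra.
Open Scope R_scope.

Fixpoint rsum (f : nat -> R) (n : nat) : R :=
  match n with O => 0 | S m => rsum f m + f m end.

Definition in_cc (a b x : R) : Prop := a <= x <= b.

(* D is the derivative of V at x relative to [a,b] (one-sided at endpoints) *)
Definition deriv_within (a b : R) (V : R -> R) (x l : R) : Prop :=
  forall eps, 0 < eps -> exists delta, 0 < delta /\
    forall y, in_cc a b y -> y <> x -> Rabs (y - x) < delta ->
      Rabs ((V y - V x) / (y - x) - l) < eps.

Definition continuous_on (a b : R) (f : R -> R) : Prop :=
  forall x, in_cc a b x -> forall eps, 0 < eps -> exists delta, 0 < delta /\
    forall y, in_cc a b y -> Rabs (y - x) < delta -> Rabs (f y - f x) < eps.

Definition C1_with_deriv (a b : R) (V D : R -> R) : Prop :=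
  (forall x, in_cc a b x -> deriv_within a b V x (D x)) /\ continuous_on a b D.

Definition abs_continuous_on (a b : R) (f : R -> R) : Prop :=
  forall eps, 0 < eps -> exists delta, 0 < delta /\
    forall (n : nat) (u v : nat -> R),
      (forall i, (i < n)%nat -> a <= u i /\ u i <= v i /\ v i <= b) ->
      (forall i j, (i < j < n)%nat -> v i <= u j) ->
      rsum (fun i => v i - u i) n < delta ->
      rsum (fun i => Rabs (f (v i) - f (u i))) n < eps.

Definition null_set (N : R -> Prop) : Prop :=
  forall eps, 0 < eps -> exists u v : nat -> R,
    (forall k, u k <= v k) /\
    (forall x, N x -> exists k, u k < x < v k) /\
    (forall n, rsum (fun k => v k - u k) n <= eps).

Definition ae_on (a b : R) (P : R -> Prop) : Prop :=
  exists N, null_set N /\ forall x, in_cc a b x -> ~ N x -> P x.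

Definition convex_on (a b : R) (V : R -> R) : Prop :=
  forall x y t, in_cc a b x -> in_cc a b y -> 0 <= t <= 1 ->
    V (t * x + (1 - t) * y) <= t * V x + (1 - t) * V y.

Definition p (x : R) : R := 1 + x ^ 3.
(* integer part: Int_part x = up x - 1 is the floor of x *)
Definition q (x : R) : R := IZR (Int_part x).

Definition is_solution (V : R -> R) : Prop :=
  exists D : R -> R,
    C1_with_deriv 2 6 V D /\ abs_continuous_on 2 6 D /\
    ae_on 2 6 (fun x => exists w, derivable_pt_lim D x w /\
       x ^ 3 * w ^ 2 + p x * x ^ 2 * w + q x * (x * D x - V x) = 0) /\
    V 2 = 9 /\ V 6 = 1.

Definition lower_fn (x : R) : R := Rmax (x / 6) (6 * x ^ 2 - 50 * x + 85).
Definition upper_fn (x : R) : R := 13 - 2 * x.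

Definition in_fun_interval (a b : R) (lo hi V : R -> R) : Prop :=
  forall x, in_cc a b x -> lo x <= V x /\ V x <= hi x.

Definition convex_solution_in (V : R -> R) : Prop :=
  is_solution V /\ convex_on 2 6 V /\ in_fun_interval 2 6 lower_fn upper_fn V.

From Pilot Require Import Defs.
From Stdlib Require Import Reals Lra Psatz List Classical ClassicalEpsilon.
From Coquelicot Require Import Coquelicot.
Open Scope R_scope.

(* Existence and uniqueness of the convex solution of
     x^3 V''^2 + p(x) x^2 V'' + q(x) (x V' - V) = 0  a.e. on [2, 6],  V(2) = 9, V(6) = 1,
   so that the extremal convex solutions both equal this solution V_star.

   With u = x V' - V one has u' = x V'' and (V/x)' = u/x^2.  On each piece (k, k+1)
   the equation is a quadratic in V'' whose nonnegative root is pos_root(x, -k u), so u solves the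
   integral equation u = Tmap u, u(x) = shift u + int_2^x t pos_root(t, -q(t) u(t)) dt, where the
   constant shift u encodes the boundary conditions.  Tmap is an 8/9-contraction on continuous
   functions (after clamping to the a priori ranges), so Banach's theorem gives u_star, and
   V_star x = x (9/2 + int_2^x u_star/t^2).  V_star has a nondecreasing derivative (hence is
   convex) and lies in the prescribed functional interval.

   Convexity forces V'' >= 0, i.e. the nonnegative root.  If two such solutions A, B
   with equal boundary values had A - B > 0 somewhere, at an interior maximum x0 one gets
   A'' - B'' >= c > 0 nearby, so A - B - c/2 (x - x0)^2 is nondecreasing to the right of x0,
   contradicting maximality.  Monotonicity from an a.e. nonnegative derivative is proved for
   absolutely continuous functions with Cousin's lemma (fine tagged partitions). *)

(* A tagged interval (x, z, y) stands for [x, y] with tag z.  [fine dl a t l] says that l lists,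
   from right to left, a tagged partition of [a, t] which is fine for the gauge dl: every interval
   lies within distance dl z of its tag z. *)
Inductive fine (dl : R -> R) (a : R) : R -> list (R * R * R) -> Prop :=
| fine_nil : fine dl a a nil
| fine_cons x z y l : fine dl a x l -> x <= z <= y -> z - x < dl z -> y - z < dl z ->
    fine dl a y ((x, z, y) :: l).

Lemma fine_le dl a t l : fine dl a t l -> a <= t.
Proof. induction 1; lra. Qed.

(* Cousin's lemma: every positive gauge on [a, b] admits a fine tagged partition of [a, b].
   The supremum s of the points t reachable by fine partitions of [a, t] is reached and equals b. *)
Lemma cousin (dl : R -> R) (a b : R) : a <= b -> (forall z, a <= z <= b -> 0 < dl z) ->
  exists l, fine dl a b l.
Proof.
  intros hab hd.
  set (S := fun t => a <= t <= b /\ exists l, fine dl a t l).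
  assert (hb : bound S) by (exists b; intros t [[_ ?] _]; auto).
  assert (he : exists t, S t) by (exists a; split; [lra | exists nil; constructor]).
  destruct (completeness S hb he) as [s [hub hlub]].
  assert (has : a <= s) by (apply hub; split; [lra | exists nil; constructor]).
  assert (hsb : s <= b) by (apply hlub; intros t [[_ ?] _]; auto).
  assert (hds := hd s (conj has hsb)).
  assert (ht : exists t, S t /\ s - dl s < t).
  { apply NNPP; intro hn. assert (s <= s - dl s); [|lra].
    apply hlub. intros t ht. apply Rnot_lt_le. intro. apply hn. exists t. auto. }
  destruct ht as [t [[[hat htb] [l hl]] hts]].
  assert (hts2 : t <= s) by (apply hub; split; [lra | exists l; auto]).
  destruct (Rle_lt_or_eq_dec s b hsb) as [hlt | ->].
  - (* a fine partition reaches some point beyond s: contradiction *)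
    exfalso. destruct (Rle_dec b (s + dl s / 2)) as [h1 | h1].
    + assert (S b) by (split; [lra | exists ((t, s, b) :: l); constructor; auto; lra]).
      assert (b <= s) by (apply hub; auto). lra.
    + assert (S (s + dl s / 2))
        by (split; [lra | exists ((t, s, s + dl s / 2) :: l); constructor; auto; lra]).
      assert (s + dl s / 2 <= s) by (apply hub; auto). lra.
  - exists ((t, b, b) :: l). constructor; auto; lra.
Qed.

(* [ordered a l t]: l lists, from right to left, non-overlapping tagged intervals of [a, t]. *)
Fixpoint ordered (a : R) (l : list (R * R * R)) (t : R) : Prop :=
  match l with
  | nil => a <= t
  | (x, z, y) :: r => y <= t /\ x <= z <= y /\ ordered a r x
  end.

Lemma fine_ordered dl a t l : fine dl a t l -> ordered a l t.
Proof. induction 1; simpl; auto; [lra|]. repeat split; auto; lra. Qed.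

Lemma ordered_le a l t : ordered a l t -> a <= t.
Proof.
  revert t; induction l as [|[[x z] y] r IH]; simpl; intros t H; auto.
  destruct H as [h1 [h2 h3]]. apply IH in h3. lra.
Qed.

Lemma ordered_weaken a l t t' : ordered a l t -> t <= t' -> ordered a l t'.
Proof.
  destruct l as [|[[x z] y] r]; simpl; intros H1 H2; [lra|].
  destruct H1 as [? [? ?]]. repeat split; auto; lra.
Qed.

Lemma ordered_bounds a l t : ordered a l t ->
  forall x z y, In (x, z, y) l -> a <= x /\ x <= z <= y /\ y <= t.
Proof.
  revert t; induction l as [|[[x z] y] r IH]; simpl; intros t H x' z' y' Hin; [contradiction|].
  destruct H as [h1 [h2 h3]]. destruct Hin as [He | Hin].
  - inversion He; subst. apply ordered_le in h3. lra.
  - destruct (IH x h3 x' z' y' Hin). lra.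
Qed.

Lemma ordered_filter (f : R * R * R -> bool) a l t : ordered a l t -> ordered a (filter f l) t.
Proof.
  revert t; induction l as [|[[x z] y] r IH]; simpl; intros t H; auto.
  destruct H as [h1 [h2 h3]]. destruct (f (x, z, y)); simpl.
  - split; auto.
  - apply ordered_weaken with x; auto. lra.
Qed.

(* Listed from the left, the intervals are increasing: the (p+1)-th from the right ends before the
   q-th from the right begins, for q < p. *)
Lemma ordered_nth a l t : ordered a l t -> forall d0 q p, (q < p < length l)%nat ->
  snd (nth p l d0) <= fst (fst (nth q l d0)).
Proof.
  revert t; induction l as [|[[x z] y] r IH]; simpl; intros t H d0 q p hqp; [lia|].
  destruct H as [h1 [h2 h3]]. destruct q as [|q]; destruct p as [|p]; try lia.
  - simpl. destruct (nth p r d0) as [[x' z'] y'] eqn:E.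
    assert (In (x', z', y') r) by (rewrite <- E; apply nth_In; lia).
    destruct (ordered_bounds _ _ _ h3 _ _ _ H). simpl. lra.
  - simpl. apply (IH x h3). lia.
Qed.

Definition tagged_in (N : R -> Prop) (e : R * R * R) : bool :=
  if excluded_middle_informative (N (snd (fst e))) then true else false.

Definition null_tagged (N : R -> Prop) (l : list (R * R * R)) := filter (tagged_in N) l.

Lemma null_tagged_In N l x z y : In (x, z, y) (null_tagged N l) -> In (x, z, y) l /\ N z.
Proof.
  unfold null_tagged, tagged_in. rewrite filter_In. simpl.
  destruct (excluded_middle_informative (N z)); intros [? ?]; auto; discriminate.
Qed.

Fixpoint lsum (g : R * R * R -> R) (l : list (R * R * R)) : R :=
  match l with nil => 0 | e :: r => g e + lsum g r end.

Definition total_length l := lsum (fun e => snd e - fst (fst e)) l.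
Definition total_increment (F : R -> R) l := lsum (fun e => Rabs (F (snd e) - F (fst (fst e)))) l.

Lemma lsum_filter g f l :
  lsum g l = lsum g (filter f l) + lsum g (filter (fun e => negb (f e)) l).
Proof. induction l as [|e r IH]; simpl; [lra|]. destruct (f e); simpl; lra. Qed.

Lemma rsum_ext f g n : (forall i, (i < n)%nat -> f i = g i) -> rsum f n = rsum g n.
Proof.
  induction n; simpl; intros H; auto.
  rewrite IHn by (intros; apply H; lia). rewrite H by lia. auto.
Qed.

Lemma rsum_list (g : R * R * R -> R) d0 l :
  rsum (fun i => g (nth (length l - 1 - i) l d0)) (length l) = lsum g l.
Proof.
  induction l as [|e r IH]; simpl; auto.
  rewrite (rsum_ext _ (fun i => g (nth (length r - 1 - i) r d0))).
  - rewrite IH. replace (length r - 0 - length r)%nat with 0%nat by lia. simpl. ring.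
  - intros i hi. f_equal. replace (length r - 0 - i)%nat with (S (length r - 1 - i)) by lia. auto.
Qed.

Lemma abs_continuous_list a b F : abs_continuous_on a b F -> forall eps, 0 < eps ->
  exists d, 0 < d /\ forall l, ordered a l b -> total_length l < d -> total_increment F l < eps.
Proof.
  intros hac eps heps. destruct (hac eps heps) as [d [hd H]]. exists d; split; auto.
  intros l hl hs. set (d0 := (0, 0, 0)). set (n := length l).
  specialize (H n (fun i => fst (fst (nth (n - 1 - i) l d0))) (fun i => snd (nth (n - 1 - i) l d0))).
  unfold total_increment. rewrite <- (rsum_list _ d0).
  unfold total_length in hs. rewrite <- (rsum_list _ d0) in hs.
  apply H; [|intros i j hij; apply (ordered_nth _ _ _ hl); unfold n in *; lia | exact hs].
  intros i hi. destruct (nth (n - 1 - i) l d0) as [[x z] y] eqn:E.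
  assert (In (x, z, y) l) by (rewrite <- E; apply nth_In; unfold n in *; lia).
  destruct (ordered_bounds _ _ _ hl _ _ _ H0). simpl. lra.
Qed.

Lemma total_length_inside a U l : forall t V, ordered a l t ->
  (forall x z y, In (x, z, y) l -> U <= x /\ y <= V) -> U <= V -> total_length l <= V - U.
Proof.
  induction l as [|[[x z] y] r IH]; intros t V hd hin hUV; unfold total_length; simpl; [lra|].
  destruct hd as [h1 [h2 h3]].
  destruct (hin x z y (or_introl eq_refl)) as [hx hy].
  assert (total_length r <= x - U); [|unfold total_length in *; lra].
  apply (IH x x h3); [|lra]. intros x' z' y' Hi. split.
  - apply (hin x' z' y'); simpl; auto.
  - destruct (ordered_bounds _ _ _ h3 _ _ _ Hi). lra.
Qed.

Lemma total_length_covered (u v : nat -> R) (kf : R -> nat) (huv : forall k, u k <= v k) a K :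
  forall l t, ordered a l t ->
  (forall x z y, In (x, z, y) l -> (kf z < K)%nat /\ u (kf z) <= x /\ y <= v (kf z)) ->
  total_length l <= rsum (fun k => v k - u k) K.
Proof.
  induction K; intros l t hd hin.
  - destruct l as [|[[x z] y] r]; [unfold total_length; simpl; lra|].
    destruct (hin x z y (or_introl eq_refl)). lia.
  - set (f := fun e : R * R * R => Nat.eqb (kf (snd (fst e))) K).
    unfold total_length. rewrite (lsum_filter _ f). simpl.
    assert (H1 : total_length (filter f l) <= v K - u K).
    { apply (total_length_inside a _ _ t); auto; [apply ordered_filter; auto|].
      intros x z y Hi. apply filter_In in Hi. destruct Hi as [Hi Hf]. unfold f in Hf; simpl in Hf.
      apply Nat.eqb_eq in Hf. destruct (hin x z y Hi) as [_ [? ?]]. rewrite Hf in *. lra. }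
    assert (H2 : total_length (filter (fun e => negb (f e)) l) <= rsum (fun k => v k - u k) K).
    { apply (IHK _ t); [apply ordered_filter; auto|].
      intros x z y Hi. apply filter_In in Hi. destruct Hi as [Hi Hf]. unfold f in Hf; simpl in Hf.
      apply Bool.negb_true_iff, Nat.eqb_neq in Hf. destruct (hin x z y Hi) as [? [? ?]].
      repeat split; auto. lia. }
    unfold total_length in H1, H2. lra.
Qed.

Lemma deriv_approx a b F z w : deriv_within a b F z w -> forall eps, 0 < eps ->
  exists d, 0 < d /\ forall y, a <= y <= b -> Rabs (y - z) < d ->
    Rabs (F y - F z - w * (y - z)) <= eps * Rabs (y - z).
Proof.
  intros H eps he. destruct (H eps he) as [d [hd Hd]]. exists d; split; auto.
  intros y hy hyz. destruct (Req_dec y z) as [-> | hne].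
  - replace (F z - F z - w * (z - z)) with 0 by ring. rewrite Rabs_R0.
    apply Rmult_le_pos; [lra | apply Rabs_pos].
  - specialize (Hd y hy hne hyz).
    replace ((F y - F z) / (y - z) - w) with ((F y - F z - w * (y - z)) / (y - z)) in Hd by (field; lra).
    unfold Rdiv in Hd; rewrite Rabs_mult, Rabs_inv in Hd.
    assert (0 < Rabs (y - z)) by (apply Rabs_pos_lt; lra).
    apply Rlt_le. apply (Rmult_lt_compat_r (Rabs (y - z))) in Hd; auto.
    rewrite Rmult_assoc, Rinv_l in Hd by lra. lra.
Qed.

Lemma fine_increment_bound (F : R -> R) (N : R -> Prop) dl a b eps : 0 <= eps ->
  (forall z, a <= z <= b -> ~ N z -> exists w, 0 <= w /\ forall y, a <= y <= b ->
     Rabs (y - z) < dl z -> Rabs (F y - F z - w * (y - z)) <= eps * Rabs (y - z)) ->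
  forall t l, fine dl a t l -> t <= b ->
    F t - F a >= - eps * (t - a) - total_increment F (null_tagged N l).
Proof.
  intros he hg t l hf. induction hf as [|x z y l hf IH hxy hzx hyz]; intros htb.
  - unfold total_increment; simpl; lra.
  - assert (hax := fine_le _ _ _ _ hf). specialize (IH ltac:(lra)).
    unfold null_tagged, tagged_in in *; simpl.
    destruct (excluded_middle_informative (N z)) as [hN | hN]; unfold total_increment in *; simpl.
    + pose proof (Rabs_maj2 (F y - F x)). nra.
    + destruct (hg z ltac:(lra) hN) as [w [hw Hw]].
      assert (h1 := Hw y ltac:(lra) ltac:(rewrite (Rabs_right (y - z)); lra)).
      assert (h2 := Hw x ltac:(lra) ltac:(rewrite (Rabs_left1 (x - z)); lra)).
      rewrite (Rabs_right (y - z)) in h1 by lra. rewrite (Rabs_left1 (x - z)) in h2 by lra.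
      apply Rabs_le_between in h1. apply Rabs_le_between in h2.
      assert (w * (y - z) >= 0) by nra. assert (w * (z - x) >= 0) by nra. lra.
Qed.

Lemma fine_In dl a t l : fine dl a t l -> forall x z y, In (x, z, y) l ->
  x <= z <= y /\ z - x < dl z /\ y - z < dl z /\ a <= x /\ y <= t.
Proof.
  induction 1; simpl; intros x' z' y' Hin; [contradiction|].
  assert (hax := fine_le _ _ _ _ H).
  destruct Hin as [He | Hin].
  - inversion He; subst. repeat split; lra.
  - destruct (IHfine _ _ _ Hin) as [? [? [? [? ?]]]]. repeat split; lra.
Qed.

Definition ac_on_tags (a b : R) (F : R -> R) (N : R -> Prop) : Prop :=
  forall eps, 0 < eps -> exists d, 0 < d /\ forall l, ordered a l b ->
    (forall x z y, In (x, z, y) l -> N z) -> total_length l < d -> total_increment F l < eps.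

Lemma ac_on_tags_of_ac a b F N : abs_continuous_on a b F -> ac_on_tags a b F N.
Proof.
  intros H eps he. destruct (abs_continuous_list _ _ _ H eps he) as [d [hd Hd]].
  exists d; split; auto.
Qed.

Lemma ac_on_tags_empty a b F : ac_on_tags a b F (fun _ => False).
Proof.
  intros eps he. exists 1. split; [lra|]. intros l hl hN _.
  destruct l as [|[[x z] y] r]; [unfold total_increment; simpl; lra|].
  exfalso; apply (hN x z y); simpl; auto.
Qed.

Lemma null_empty : null_set (fun _ => False).
Proof.
  intros eps he. exists (fun _ => 0), (fun _ => 0).
  split; [intros; lra | split; [intros; contradiction | induction n; simpl; lra]].
Qed.

(* The gauge adapted to a cover of N and to the derivative of F outside N; kf z is the index of
   a cover interval containing the dl-neighbourhood of a tag z in N. *)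
Lemma adapted_gauge (a b : R) (F : R -> R) (N : R -> Prop) (u v : nat -> R) eps :
  0 < eps -> (forall x, N x -> exists k, u k < x < v k) ->
  (forall x, a <= x <= b -> ~ N x -> exists w, 0 <= w /\ deriv_within a b F x w) ->
  exists (dl : R -> R) (kf : R -> nat), forall z, a <= z <= b -> 0 < dl z /\
    (N z -> u (kf z) <= z - dl z /\ z + dl z <= v (kf z)) /\
    (~ N z -> exists w, 0 <= w /\ forall y, a <= y <= b -> Rabs (y - z) < dl z ->
       Rabs (F y - F z - w * (y - z)) <= eps * Rabs (y - z)).
Proof.
  intros heps hcov hd.
  assert (H : forall z, exists dk : R * nat, a <= z <= b -> 0 < fst dk /\
      (N z -> u (snd dk) <= z - fst dk /\ z + fst dk <= v (snd dk)) /\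
      (~ N z -> exists w, 0 <= w /\ forall y, a <= y <= b -> Rabs (y - z) < fst dk ->
         Rabs (F y - F z - w * (y - z)) <= eps * Rabs (y - z))).
  { intros z. destruct (classic (a <= z <= b)) as [hz | hz]; [|exists (1, 0%nat); contradiction].
    destruct (classic (N z)) as [hn | hn].
    - destruct (hcov z hn) as [k hk]. exists (Rmin (z - u k) (v k - z), k). intros _. simpl.
      pose proof (Rmin_l (z - u k) (v k - z)). pose proof (Rmin_r (z - u k) (v k - z)).
      split; [apply Rmin_glb_lt; lra | split; [intros _; lra | contradiction]].
    - destruct (hd z hz hn) as [w [hw hder]].
      destruct (deriv_approx _ _ _ _ _ hder eps heps) as [dd [hdd Hdd]].
      exists (dd, 0%nat). intros _. simpl. split; auto. split; [contradiction|]. exists w; auto. }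
  exists (fun z => fst (proj1_sig (constructive_indefinite_description _ (H z)))).
  exists (fun z => snd (proj1_sig (constructive_indefinite_description _ (H z)))).
  intros z. exact (proj2_sig (constructive_indefinite_description _ (H z))).
Qed.

(* Pick d from absolute continuity, cover N by intervals of total length
   d / 2, and estimate along a fine partition for the adapted gauge. *)
Lemma decrease_small (a b : R) (F : R -> R) (N : R -> Prop) :
  a <= b -> null_set N -> ac_on_tags a b F N ->
  (forall x, a <= x <= b -> ~ N x -> exists w, 0 <= w /\ deriv_within a b F x w) ->
  forall eps, 0 < eps -> F a - F b <= eps * (b - a) + eps.
Proof.
  intros hab hN hac hd eps heps.
  destruct (hac eps heps) as [d [hdp hdd]].
  destruct (hN (d / 2) ltac:(lra)) as [u [v [huv [hcov hsum]]]].
  destruct (adapted_gauge a b F N u v eps heps hcov hd) as [dl [kf Hdl]].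
  destruct (cousin dl a b hab) as [l hl]; [intros z hz; apply (Hdl z hz)|].
  set (l' := null_tagged N l).
  assert (H1 := fine_increment_bound F N dl a b eps (Rlt_le _ _ heps)
     ltac:(intros z hz hn; apply (proj2 (proj2 (Hdl z hz)) hn)) b l hl (Rle_refl b)).
  assert (hord : ordered a l' b) by (apply ordered_filter, (fine_ordered _ _ _ _ hl)).
  assert (hK : exists K, forall x z y, In (x, z, y) l' -> (kf z < K)%nat).
  { clear - l'. induction l' as [|[[x z] y] r [K IH]]; [exists 0%nat; intros; contradiction|].
    exists (S (Nat.max K (kf z))). intros x' z' y' [He | Hi].
    - inversion He; subst; lia.
    - specialize (IH _ _ _ Hi); lia. }
  destruct hK as [K hK].
  assert (hlen : total_length l' <= rsum (fun k => v k - u k) K).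
  { apply (total_length_covered u v kf huv a K l' b hord). intros x z y Hi.
    destruct (null_tagged_In _ _ _ _ _ Hi) as [Hi0 Hnz].
    destruct (fine_In _ _ _ _ hl _ _ _ Hi0) as [h1 [h2 [h3 [h4 h5]]]].
    destruct (Hdl z ltac:(lra)) as [_ [hN1 _]]. destruct (hN1 Hnz).
    split; [apply hK with x y; auto | lra]. }
  assert (total_increment F l' < eps).
  { apply hdd; auto; [|pose proof (hsum K); lra].
    intros x z y Hi. apply (null_tagged_In _ _ _ _ _ Hi). }
  unfold l' in *. lra.
Qed.

Lemma nondecreasing_of_ae_deriv (a b : R) (F : R -> R) (N : R -> Prop) :
  a <= b -> null_set N -> ac_on_tags a b F N ->
  (forall x, a <= x <= b -> ~ N x -> exists w, 0 <= w /\ deriv_within a b F x w) ->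
  F a <= F b.
Proof.
  intros hab hN hac hd. apply Rnot_lt_le; intro hlt.
  set (eps := (F a - F b) / (2 * (b - a + 1))).
  assert (heps : 0 < eps) by (unfold eps; apply Rdiv_lt_0_compat; lra).
  assert (eps * (b - a) + eps = (F a - F b) / 2) by (unfold eps; field; lra).
  pose proof (decrease_small a b F N hab hN hac hd eps heps). lra.
Qed.

Lemma even_double k : Nat.even (2 * k) = true.
Proof. rewrite Nat.even_mul; auto. Qed.
Lemma even_succ_double k : Nat.even (S (2 * k)) = false.
Proof. rewrite Nat.even_succ, Nat.odd_mul; auto. Qed.

Lemma rsum_nondecreasing (f : nat -> R) : (forall k, 0 <= f k) ->
  forall n m, (n <= m)%nat -> rsum f n <= rsum f m.
Proof. intros hf n m hnm. induction hnm; [lra|]. simpl. specialize (hf m). lra. Qed.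

(* Null sets are closed under binary union: interleave the two covers. *)
Lemma null_union (N1 N2 : R -> Prop) :
  null_set N1 -> null_set N2 -> null_set (fun x => N1 x \/ N2 x).
Proof.
  intros h1 h2 eps he.
  destruct (h1 (eps / 2) ltac:(lra)) as [u1 [v1 [hu1 [hc1 hs1]]]].
  destruct (h2 (eps / 2) ltac:(lra)) as [u2 [v2 [hu2 [hc2 hs2]]]].
  set (u := fun n => if Nat.even n then u1 (Nat.div2 n) else u2 (Nat.div2 n)).
  set (v := fun n => if Nat.even n then v1 (Nat.div2 n) else v2 (Nat.div2 n)).
  exists u, v. split; [intros k; unfold u, v; destruct (Nat.even k); auto|]. split.
  - intros x [hx | hx].
    + destruct (hc1 x hx) as [k hk]. exists (2 * k)%nat.
      unfold u, v. rewrite even_double, Nat.div2_double. auto.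
    + destruct (hc2 x hx) as [k hk]. exists (S (2 * k)).
      unfold u, v. rewrite even_succ_double, Nat.div2_succ_double. auto.
  - assert (hm : forall m, rsum (fun k => v k - u k) (2 * m) =
        rsum (fun k => v1 k - u1 k) m + rsum (fun k => v2 k - u2 k) m).
    { induction m; [simpl; lra|].
      replace (2 * S m)%nat with (S (S (2 * m))) by lia.
      change (rsum (fun k => v k - u k) (2 * m) + (v (2 * m)%nat - u (2 * m)%nat)
              + (v (S (2 * m)) - u (S (2 * m))) = rsum (fun k => v1 k - u1 k) (S m)
              + rsum (fun k => v2 k - u2 k) (S m)). rewrite IHm.
      unfold u, v. rewrite even_succ_double, even_double, Nat.div2_succ_double, Nat.div2_double.
      simpl; lra. }
    intros n. eapply Rle_trans.
    + apply (rsum_nondecreasing (fun k => v k - u k)); [|instantiate (1 := (2 * n)%nat); lia].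
      intros k; unfold u, v; destruct (Nat.even k);
        [specialize (hu1 (Nat.div2 k)) | specialize (hu2 (Nat.div2 k))]; lra.
    + rewrite hm. specialize (hs1 n); specialize (hs2 n). lra.
Qed.

(* Continuity rules for real functions, stated with the operations of the reals so that they
   apply directly to goals written with +, *, /, sqrt. *)
Lemma cplus (f g : R -> R) x : continuous f x -> continuous g x -> continuous (fun t => f t + g t) x.
Proof. intros. exact (continuous_plus f g x H H0). Qed.
Lemma cmult (f g : R -> R) x : continuous f x -> continuous g x -> continuous (fun t => f t * g t) x.
Proof. intros. exact (continuous_mult f g x H H0). Qed.
Lemma cminus (f g : R -> R) x : continuous f x -> continuous g x -> continuous (fun t => f t - g t) x.
Proof. intros. apply cplus; auto. exact (continuous_opp g x H0). Qed.
Lemma cconst (c x : R) : continuous (fun _ : R => c) x.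
Proof. apply continuous_const. Qed.
Lemma cid (x : R) : continuous (fun t : R => t) x.
Proof. apply continuous_id. Qed.
Lemma cpow (f : R -> R) x n : continuous f x -> continuous (fun t => f t ^ n) x.
Proof. intros H. induction n; simpl; [apply cconst | apply cmult; auto]. Qed.
Lemma cdiv (f g : R -> R) x :
  continuous f x -> continuous g x -> g x <> 0 -> continuous (fun t => f t / g t) x.
Proof. intros. apply cmult; auto. apply continuous_Rinv_comp; auto. Qed.
Lemma csqrt (f : R -> R) x : continuous f x -> 0 <= f x -> continuous (fun t => sqrt (f t)) x.
Proof.
  intros H h. apply (continuous_comp f sqrt); auto.
  apply continuity_pt_filterlim, continuity_pt_sqrt; auto.
Qed.
Lemma ccomp (f g : R -> R) x : continuous f x -> continuous g (f x) -> continuous (fun t => g (f t)) x.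
Proof. intros. apply (continuous_comp f g); auto. Qed.

Lemma lip_cont f x K : 0 <= K -> (forall y, Rabs (f y - f x) <= K * Rabs (y - x)) ->
  continuous f x.
Proof.
  intros hK H. apply continuity_pt_filterlim.
  unfold continuity_pt, continue_in, limit1_in, limit_in; simpl; unfold R_dist.
  intros eps he. exists (eps / (K + 1)). split; [apply Rdiv_lt_0_compat; lra|].
  intros y [_ hy]. eapply Rle_lt_trans; [apply H|].
  apply Rle_lt_trans with (K * (eps / (K + 1))); [apply Rmult_le_compat_l; lra|].
  apply Rlt_le_trans with ((K + 1) * (eps / (K + 1))).
  - apply Rmult_lt_compat_r; [apply Rdiv_lt_0_compat|]; lra.
  - right; field; lra.
Qed.

Definition contR (f : R -> R) := forall x, continuous f x.

(* The clamp of t to [lo, hi]: used to extend functions of [lo, hi] to R. *)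
Definition clamp (lo hi t : R) : R := Rmax lo (Rmin hi t).

Lemma clamp_bounds lo hi t : lo <= hi -> lo <= clamp lo hi t <= hi.
Proof. unfold clamp, Rmax, Rmin. repeat destruct Rle_dec; lra. Qed.
Lemma clamp_id lo hi t : lo <= t <= hi -> clamp lo hi t = t.
Proof. unfold clamp, Rmax, Rmin. repeat destruct Rle_dec; lra. Qed.
Lemma clamp_low lo hi t : lo <= hi -> t <= lo -> clamp lo hi t = lo.
Proof. unfold clamp, Rmax, Rmin. repeat destruct Rle_dec; lra. Qed.
Lemma clamp_high lo hi t : lo <= hi -> hi <= t -> clamp lo hi t = hi.
Proof. unfold clamp, Rmax, Rmin. repeat destruct Rle_dec; lra. Qed.
Lemma clamp_lip lo hi s t : Rabs (clamp lo hi s - clamp lo hi t) <= Rabs (s - t).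
Proof.
  apply Rabs_le. pose proof (Rle_abs (s - t)). pose proof (Rabs_maj2 (s - t)).
  unfold clamp, Rmax, Rmin. repeat destruct Rle_dec; lra.
Qed.
Lemma clamp_cont lo hi x : continuous (clamp lo hi) x.
Proof. apply (lip_cont _ _ 1); [lra|]. intros; rewrite Rmult_1_l; apply clamp_lip. Qed.

Lemma cube_ge x : 2 <= x -> 8 <= x ^ 3.
Proof. intros. assert (4 <= x ^ 2) by nra. simpl; nra. Qed.

Lemma p_sq_ge x : 2 <= x -> 36 <= p x * x ^ 2.
Proof. intros. unfold p. assert (4 <= x ^ 2) by nra. pose proof (cube_ge x H). nra. Qed.

(* pos_root x c: the nonnegative root w of  x^3 w^2 + p(x) x^2 w = c  (for x >= 2, c >= 0).
   This is how the equation determines V'' from x V' - V. *)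
Definition pos_root (x c : R) : R :=
  (sqrt ((p x * x ^ 2) ^ 2 + 4 * x ^ 3 * c) - p x * x ^ 2) / (2 * x ^ 3).

Lemma pos_root_eq x c : 2 <= x -> 0 <= c ->
  x ^ 3 * pos_root x c ^ 2 + p x * x ^ 2 * pos_root x c = c.
Proof.
  intros hx hc. unfold pos_root. pose proof (cube_ge x hx). pose proof (p_sq_ge x hx).
  assert (hs : sqrt ((p x * x ^ 2) ^ 2 + 4 * x ^ 3 * c) ^ 2 = (p x * x ^ 2) ^ 2 + 4 * x ^ 3 * c).
  { rewrite <- Rsqr_pow2. apply Rsqr_sqrt. nra. }
  set (s := sqrt ((p x * x ^ 2) ^ 2 + 4 * x ^ 3 * c)) in *. set (b := p x * x ^ 2) in *.
  replace (x ^ 3 * ((s - b) / (2 * x ^ 3)) ^ 2 + b * ((s - b) / (2 * x ^ 3)))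
    with ((s ^ 2 - b ^ 2) / (4 * x ^ 3)) by (field; lra).
  rewrite hs. field. lra.
Qed.

Lemma pos_root_nonneg x c : 2 <= x -> 0 <= c -> 0 <= pos_root x c.
Proof.
  intros hx hc. unfold pos_root. pose proof (cube_ge x hx). pose proof (p_sq_ge x hx).
  apply Rdiv_le_0_compat; [|lra].
  assert (p x * x ^ 2 <= sqrt ((p x * x ^ 2) ^ 2 + 4 * x ^ 3 * c)); [|lra].
  rewrite <- (sqrt_pow2 (p x * x ^ 2)) at 1 by lra. apply sqrt_le_1_alt. nra.
Qed.

Lemma pos_root_le x c : 2 <= x -> 0 <= c -> pos_root x c <= c / (p x * x ^ 2).
Proof.
  intros hx hc. pose proof (pos_root_eq x c hx hc). pose proof (pos_root_nonneg x c hx hc).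
  pose proof (p_sq_ge x hx). pose proof (cube_ge x hx).
  apply Rmult_le_reg_r with (p x * x ^ 2); [lra|].
  unfold Rdiv; rewrite Rmult_assoc, Rinv_l by lra. nra.
Qed.

Lemma pos_root_lip x c1 c2 : 2 <= x -> 0 <= c1 -> 0 <= c2 ->
  Rabs (pos_root x c1 - pos_root x c2) <= Rabs (c1 - c2) / (p x * x ^ 2).
Proof.
  intros hx h1 h2. pose proof (pos_root_eq x c1 hx h1). pose proof (pos_root_eq x c2 hx h2).
  pose proof (pos_root_nonneg x c1 hx h1). pose proof (pos_root_nonneg x c2 hx h2).
  pose proof (p_sq_ge x hx). pose proof (cube_ge x hx).
  set (G1 := pos_root x c1) in *. set (G2 := pos_root x c2) in *. set (b := p x * x ^ 2) in *.
  assert (he : (G1 - G2) * (x ^ 3 * (G1 + G2) + b) = c1 - c2) by nra.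
  apply Rmult_le_reg_r with b; [lra|]. unfold Rdiv; rewrite Rmult_assoc, Rinv_l, Rmult_1_r by lra.
  rewrite <- he, Rabs_mult, (Rabs_right (x ^ 3 * (G1 + G2) + b)) by nra.
  apply Rmult_le_compat_l; [apply Rabs_pos | nra].
Qed.

Lemma pos_root_cont (c : R -> R) t : continuous c t -> 0 <= c t ->
  continuous (fun s => pos_root (clamp 2 6 s) (c s)) t.
Proof.
  intros hc hc0. unfold pos_root, p.
  pose proof (clamp_bounds 2 6 t ltac:(lra)). pose proof (cube_ge (clamp 2 6 t) ltac:(lra)).
  assert (hx := clamp_cont 2 6 t).
  apply cdiv; [| apply cmult; [apply cconst | apply cpow; auto] | lra].
  assert (hb : continuous (fun s => (1 + clamp 2 6 s ^ 3) * clamp 2 6 s ^ 2) t)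
    by (apply cmult; [apply cplus; [apply cconst | apply cpow; auto] | apply cpow; auto]).
  apply cminus; [apply csqrt | exact hb].
  { apply cplus; [apply cpow; exact hb|].
    apply cmult; [apply cmult; [apply cconst | apply cpow; auto] | exact hc]. }
  assert (0 <= ((1 + clamp 2 6 t ^ 3) * clamp 2 6 t ^ 2) ^ 2) by apply pow2_ge_0.
  assert (0 <= 4 * clamp 2 6 t ^ 3 * c t) by (apply Rmult_le_pos; lra). lra.
Qed.

(* On a piece [k, k+1] the floor q equals k, and u = x V' - V solves u' = x * pos_root(x, -k u).
   [rhs k t v] is this right-hand side, with t and v clamped to [2, 6] and [-30, 0] (the a priori
   ranges) so that it is globally defined, bounded and Lipschitz in v. *)
Definition rhs (k t v : R) : R := clamp 2 6 t * pos_root (clamp 2 6 t) (- k * clamp (-30) 0 v).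

Lemma rhs_nonneg k t v : 0 <= k -> 0 <= rhs k t v.
Proof.
  intros hk0. unfold rhs. pose proof (clamp_bounds 2 6 t ltac:(lra)).
  pose proof (clamp_bounds (-30) 0 v ltac:(lra)).
  apply Rmult_le_pos; [lra|]. apply pos_root_nonneg; nra.
Qed.

Lemma rhs_le k t v : 0 <= k -> rhs k t v <= 30 * k / ((1 + clamp 2 6 t ^ 3) * clamp 2 6 t).
Proof.
  intros hk0. unfold rhs. pose proof (clamp_bounds 2 6 t ltac:(lra)) as hc.
  pose proof (clamp_bounds (-30) 0 v ltac:(lra)).
  set (x := clamp 2 6 t) in *. set (c := - k * clamp (-30) 0 v).
  assert (hG := pos_root_le x c ltac:(lra) ltac:(unfold c; nra)).
  unfold p in hG. pose proof (cube_ge x ltac:(lra)).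
  apply Rle_trans with (x * (c / ((1 + x ^ 3) * x ^ 2))); [apply Rmult_le_compat_l; lra|].
  apply Rle_trans with (x * (30 * k / ((1 + x ^ 3) * x ^ 2))).
  - apply Rmult_le_compat_l; [lra|]. unfold Rdiv. apply Rmult_le_compat_r; [|unfold c; nra].
    apply Rlt_le, Rinv_0_lt_compat. nra.
  - right. field. split; nra.
Qed.

Lemma rhs_le9 k t v : 0 <= k <= 5 -> rhs k t v <= 9.
Proof.
  intros hk0. eapply Rle_trans; [apply rhs_le; lra|].
  pose proof (clamp_bounds 2 6 t ltac:(lra)). set (x := clamp 2 6 t) in *.
  pose proof (cube_ge x ltac:(lra)).
  apply Rmult_le_reg_r with ((1 + x ^ 3) * x); [nra|].
  unfold Rdiv; rewrite Rmult_assoc, Rinv_l by nra. nra.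
Qed.

Lemma rhs_le_piece k t v : 2 <= k <= 5 -> k <= t <= k + 1 -> rhs k t v <= 30 / (1 + k ^ 3).
Proof.
  intros hk0 ht. eapply Rle_trans; [apply rhs_le; lra|]. rewrite clamp_id by lra.
  assert (k ^ 3 <= t ^ 3) by (apply pow_incr; lra). pose proof (cube_ge k ltac:(lra)).
  unfold Rdiv. apply Rmult_le_reg_r with ((1 + t ^ 3) * t * (1 + k ^ 3)); [nra|].
  rewrite !Rmult_assoc, (Rmult_comm (/ _)), <- !Rmult_assoc. field_simplify; nra.
Qed.

(* On its piece the right-hand side is 1/9-Lipschitz in v: the source of the contraction. *)
Lemma rhs_lip k t v1 v2 : 2 <= k <= 5 -> k <= t <= k + 1 ->
  Rabs (rhs k t v1 - rhs k t v2) <= Rabs (v1 - v2) / 9.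
Proof.
  intros hk0 ht. unfold rhs. rewrite clamp_id by lra.
  pose proof (clamp_bounds (-30) 0 v1 ltac:(lra)). pose proof (clamp_bounds (-30) 0 v2 ltac:(lra)).
  assert (hL := pos_root_lip t (- k * clamp (-30) 0 v1) (- k * clamp (-30) 0 v2)
                  ltac:(lra) ltac:(nra) ltac:(nra)).
  rewrite <- Rmult_minus_distr_l, Rabs_mult, (Rabs_right t) by lra.
  replace (- k * clamp (-30) 0 v1 - - k * clamp (-30) 0 v2)
    with (k * (clamp (-30) 0 v2 - clamp (-30) 0 v1)) in hL by ring.
  rewrite Rabs_mult, (Rabs_right k) in hL by lra.
  assert (hc : Rabs (clamp (-30) 0 v2 - clamp (-30) 0 v1) <= Rabs (v1 - v2))
    by (rewrite (Rabs_minus_sym (clamp _ _ v2)); apply clamp_lip).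
  pose proof (p_sq_ge t ltac:(lra)). pose proof (cube_ge t ltac:(lra)). unfold p in *.
  pose proof (Rabs_pos (v1 - v2)). set (A := Rabs (v1 - v2)) in *.
  apply Rle_trans with (t * (t * A / ((1 + t ^ 3) * t ^ 2))).
  - apply Rmult_le_compat_l; [lra|]. eapply Rle_trans; [apply hL|]. unfold Rdiv.
    apply Rmult_le_compat_r; [apply Rlt_le, Rinv_0_lt_compat; lra|]. nra.
  - replace (t * (t * A / ((1 + t ^ 3) * t ^ 2))) with (A / (1 + t ^ 3)) by (field; nra).
    unfold Rdiv. apply Rmult_le_compat_l; auto. apply Rinv_le_contravar; lra.
Qed.

Lemma rhs_cont k (f : R -> R) t : 0 <= k -> continuous f t -> continuous (fun s => rhs k s (f s)) t.
Proof.
  intros hk0 hf. unfold rhs. apply cmult; [apply clamp_cont|].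
  apply (pos_root_cont (fun s => - k * clamp (-30) 0 (f s))).
  - apply cmult; [apply cconst | apply ccomp; auto; apply clamp_cont].
  - pose proof (clamp_bounds (-30) 0 (f t) ltac:(lra)). nra.
Qed.

Lemma locally_of_ball (x d : R) (P : R -> Prop) :
  0 < d -> (forall y, Rabs (y - x) < d -> P y) -> locally x P.
Proof. intros hd H. exists (mkposreal d hd). intros y hy. apply H. exact hy. Qed.

Lemma ex_RInt_rhs k f a b : 0 <= k -> contR f -> ex_RInt (fun t => rhs k t (f t)) a b.
Proof.
  intros hk0 hf. apply (ex_RInt_continuous (V := R_CompleteNormedModule)).
  intros z _. apply rhs_cont; auto.
Qed.

Lemma abs_RInt_bound (g : R -> R) a b M : ex_RInt g a b ->
  (forall t, Rmin a b <= t <= Rmax a b -> Rabs (g t) <= M) -> Rabs (RInt g a b) <= M * Rabs (b - a).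
Proof.
  intros he H. destruct (Rle_dec a b) as [hab | hab].
  - rewrite (Rabs_right (b - a)), Rmult_comm by lra. apply abs_RInt_le_const; auto.
    intros t ht. apply H. rewrite Rmin_left, Rmax_right; lra.
  - apply Rnot_le_lt in hab. rewrite <- opp_RInt_swap by (apply ex_RInt_swap; auto).
    unfold opp; simpl. rewrite Rabs_Ropp, (Rabs_left (b - a)) by lra.
    replace (- (b - a)) with (a - b) by ring. rewrite Rmult_comm.
    apply abs_RInt_le_const; [lra | apply ex_RInt_swap; auto|].
    intros t ht. apply H. rewrite Rmin_right, Rmax_left; lra.
Qed.

(* The contribution of the piece [k, k+1] to int_2^x rhs(t, f t) dt. *)
Definition piece_int (f : R -> R) (k x : R) : R := RInt (fun t => rhs k t (f t)) k (clamp k (k + 1) x).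

Lemma piece_int_diff f k x y : 0 <= k -> contR f ->
  piece_int f k y - piece_int f k x
  = RInt (fun t => rhs k t (f t)) (clamp k (k + 1) x) (clamp k (k + 1) y).
Proof.
  intros hk0 hf. unfold piece_int.
  rewrite <- (RInt_Chasles _ k (clamp k (k + 1) x) (clamp k (k + 1) y)) by (apply ex_RInt_rhs; auto).
  unfold plus; simpl. ring.
Qed.

Lemma piece_int_bounds f k x : 2 <= k <= 5 -> contR f -> 0 <= piece_int f k x <= 30 / (1 + k ^ 3).
Proof.
  intros hk0 hf. pose proof (clamp_bounds k (k + 1) x ltac:(lra)). unfold piece_int. split.
  - apply RInt_ge_0; [lra | apply ex_RInt_rhs; auto; lra|]. intros; apply rhs_nonneg; lra.
  - apply Rle_trans with (RInt (fun _ => 30 / (1 + k ^ 3)) k (clamp k (k + 1) x)).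
    + apply RInt_le; [lra | apply ex_RInt_rhs; auto; lra | apply ex_RInt_const|].
      intros t ht. apply rhs_le_piece; lra.
    + assert (0 < 30 / (1 + k ^ 3))
        by (apply Rdiv_lt_0_compat; [lra | pose proof (cube_ge k ltac:(lra)); lra]).
      set (c := 30 / (1 + k ^ 3)) in *.
      rewrite RInt_const. unfold scal; simpl; unfold mult; simpl. nra.
Qed.

Lemma piece_int_lip f k x y : 0 <= k <= 5 -> contR f ->
  Rabs (piece_int f k y - piece_int f k x) <= 9 * Rabs (y - x).
Proof.
  intros hk0 hf. rewrite piece_int_diff by (auto; lra).
  eapply Rle_trans; [apply abs_RInt_bound; [apply ex_RInt_rhs; auto; lra|]|].
  - intros t _. rewrite Rabs_right; [apply rhs_le9; lra | apply Rle_ge, rhs_nonneg; lra].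
  - apply Rmult_le_compat_l; [lra | apply clamp_lip].
Qed.

Lemma piece_int_contr f1 f2 k x e : 2 <= k <= 5 -> contR f1 -> contR f2 ->
  (forall t, Rabs (f1 t - f2 t) <= e) -> Rabs (piece_int f1 k x - piece_int f2 k x) <= e / 9.
Proof.
  intros hk0 h1 h2 he. unfold piece_int. set (c := clamp k (k + 1) x).
  pose proof (clamp_bounds k (k + 1) x ltac:(lra)).
  assert (hm : RInt (fun t => rhs k t (f1 t) - rhs k t (f2 t)) k c
               = RInt (fun t => rhs k t (f1 t)) k c - RInt (fun t => rhs k t (f2 t)) k c)
    by exact (RInt_minus _ _ k c (ex_RInt_rhs k f1 k c ltac:(lra) h1)
                (ex_RInt_rhs k f2 k c ltac:(lra) h2)).
  rewrite <- hm. eapply Rle_trans; [apply abs_RInt_bound|].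
  - apply (ex_RInt_minus (V := R_NormedModule)); apply ex_RInt_rhs; auto; lra.
  - intros t ht. rewrite Rmin_left, Rmax_right in ht by (unfold c; lra).
    eapply Rle_trans; [apply rhs_lip; unfold c in *; lra|].
    unfold Rdiv. apply Rmult_le_compat_r; [lra | apply he].
  - assert (0 <= e) by (pose proof (he 0); pose proof (Rabs_pos (f1 0 - f2 0)); lra).
    rewrite (Rabs_right (c - k)) by (unfold c; lra). unfold c; nra.
Qed.

Lemma piece_int_der f k x : 2 <= k <= 5 -> contR f -> k < x < k + 1 ->
  is_derive (fun y => piece_int f k y) x (rhs k x (f x)).
Proof.
  intros hk0 hf hx.
  apply (is_derive_ext_loc (fun y => RInt (fun t => rhs k t (f t)) k y)).
  - apply (locally_of_ball x (Rmin (x - k) (k + 1 - x))); [apply Rmin_glb_lt; lra|].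
    intros y hy. pose proof (Rmin_l (x - k) (k + 1 - x)). pose proof (Rmin_r (x - k) (k + 1 - x)).
    apply Rabs_lt_between in hy. unfold piece_int. rewrite clamp_id; auto. lra.
  - apply (is_derive_RInt (V := R_NormedModule) (fun t => rhs k t (f t))
             (fun y => RInt (fun t => rhs k t (f t)) k y) k x).
    + apply (locally_of_ball x 1); [lra|]. intros y _.
      apply (RInt_correct (V := R_CompleteNormedModule)), ex_RInt_rhs; auto; lra.
    + apply rhs_cont; auto; lra.
Qed.

Lemma piece_int_der_out f k x : 2 <= k <= 5 -> (x < k \/ k + 1 < x) ->
  is_derive (fun y => piece_int f k y) x 0.
Proof.
  intros hk0 hx. destruct hx as [hx | hx].
  - apply (is_derive_ext_loc (fun _ => RInt (fun t => rhs k t (f t)) k k)).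
    + apply (locally_of_ball x (k - x)); [lra|]. intros y hy. apply Rabs_lt_between in hy.
      unfold piece_int. rewrite clamp_low by lra. reflexivity.
    + apply (is_derive_const (K := R_AbsRing) (V := R_NormedModule)).
  - apply (is_derive_ext_loc (fun _ => RInt (fun t => rhs k t (f t)) k (k + 1))).
    + apply (locally_of_ball x (x - (k + 1))); [lra|]. intros y hy. apply Rabs_lt_between in hy.
      unfold piece_int. rewrite clamp_high by lra. reflexivity.
    + apply (is_derive_const (K := R_AbsRing) (V := R_NormedModule)).
Qed.

(* rhs_int f x = int_2^x t pos_root(t, -q(t) f(t)) dt, assembled piece by piece because q jumps
   at the integers. *)
Definition rhs_int (f : R -> R) (x : R) : R :=
  piece_int f 2 x + piece_int f 3 x + piece_int f 4 x + piece_int f 5 x.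

Lemma Rabs_sum4 a b c d : Rabs (a + b + c + d) <= Rabs a + Rabs b + Rabs c + Rabs d.
Proof.
  eapply Rle_trans; [apply Rabs_triang|]. apply Rplus_le_compat_r.
  eapply Rle_trans; [apply Rabs_triang|]. apply Rplus_le_compat_r. apply Rabs_triang.
Qed.

Lemma rhs_int_bounds f x : contR f -> 0 <= rhs_int f x <= 6.
Proof.
  intros hf. unfold rhs_int.
  destruct (piece_int_bounds f 2 x ltac:(lra) hf). destruct (piece_int_bounds f 3 x ltac:(lra) hf).
  destruct (piece_int_bounds f 4 x ltac:(lra) hf). destruct (piece_int_bounds f 5 x ltac:(lra) hf).
  simpl in *. lra.
Qed.

Lemma rhs_int_lip f x y : contR f -> Rabs (rhs_int f y - rhs_int f x) <= 36 * Rabs (y - x).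
Proof.
  intros hf. unfold rhs_int.
  pose proof (piece_int_lip f 2 x y ltac:(lra) hf). pose proof (piece_int_lip f 3 x y ltac:(lra) hf).
  pose proof (piece_int_lip f 4 x y ltac:(lra) hf). pose proof (piece_int_lip f 5 x y ltac:(lra) hf).
  match goal with |- Rabs ?d <= _ => replace d with
    ((piece_int f 2 y - piece_int f 2 x) + (piece_int f 3 y - piece_int f 3 x)
     + (piece_int f 4 y - piece_int f 4 x) + (piece_int f 5 y - piece_int f 5 x)) by ring end.
  pose proof (Rabs_sum4 (piece_int f 2 y - piece_int f 2 x) (piece_int f 3 y - piece_int f 3 x)
    (piece_int f 4 y - piece_int f 4 x) (piece_int f 5 y - piece_int f 5 x)). lra.
Qed.

Lemma rhs_int_contr f1 f2 x e : contR f1 -> contR f2 -> (forall t, Rabs (f1 t - f2 t) <= e) ->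
  Rabs (rhs_int f1 x - rhs_int f2 x) <= 4 * e / 9.
Proof.
  intros h1 h2 he. unfold rhs_int.
  pose proof (piece_int_contr f1 f2 2 x e ltac:(lra) h1 h2 he).
  pose proof (piece_int_contr f1 f2 3 x e ltac:(lra) h1 h2 he).
  pose proof (piece_int_contr f1 f2 4 x e ltac:(lra) h1 h2 he).
  pose proof (piece_int_contr f1 f2 5 x e ltac:(lra) h1 h2 he).
  match goal with |- Rabs ?d <= _ => replace d with
    ((piece_int f1 2 x - piece_int f2 2 x) + (piece_int f1 3 x - piece_int f2 3 x)
     + (piece_int f1 4 x - piece_int f2 4 x) + (piece_int f1 5 x - piece_int f2 5 x)) by ring end.
  pose proof (Rabs_sum4 (piece_int f1 2 x - piece_int f2 2 x) (piece_int f1 3 x - piece_int f2 3 x)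
    (piece_int f1 4 x - piece_int f2 4 x) (piece_int f1 5 x - piece_int f2 5 x)). lra.
Qed.

Lemma rhs_int_cont f : contR f -> contR (rhs_int f).
Proof. intros hf x. apply (lip_cont _ _ 36); [lra|]. intros; apply rhs_int_lip; auto. Qed.

Lemma ex_RInt_over_sq (g : R -> R) : contR g -> ex_RInt (fun t => g t / t ^ 2) 2 6.
Proof.
  intros hg. apply (ex_RInt_continuous (V := R_CompleteNormedModule)). intros z hz.
  rewrite Rmin_left, Rmax_right in hz by lra.
  apply cdiv; [apply hg | apply cpow, cid | apply pow_nonzero; lra].
Qed.

Lemma RInt_const_over_sq c : RInt (fun t => c / t ^ 2) 2 6 = c / 3.
Proof.
  assert (H : is_RInt (fun t => c / t ^ 2) 2 6 (minus ((fun t => - c / t) 6) ((fun t => - c / t) 2))).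
  { apply (is_RInt_derive (V := R_CompleteNormedModule)).
    - intros x hx. rewrite Rmin_left, Rmax_right in hx by lra. auto_derive; [lra | field; lra].
    - intros x hx. rewrite Rmin_left, Rmax_right in hx by lra.
      apply cdiv; [apply cconst | apply cpow, cid | apply pow_nonzero; lra]. }
  apply (is_RInt_unique (V := R_CompleteNormedModule)) in H. rewrite H.
  unfold minus, plus, opp; simpl. field.
Qed.

Lemma RInt_over_sq_diff (g1 g2 : R -> R) e : contR g1 -> contR g2 ->
  (forall t, 2 <= t <= 6 -> Rabs (g1 t - g2 t) <= e) ->
  Rabs (RInt (fun t => g1 t / t ^ 2) 2 6 - RInt (fun t => g2 t / t ^ 2) 2 6) <= e / 3.
Proof.
  intros h1 h2 he.
  assert (hm : RInt (fun t => g1 t / t ^ 2 - g2 t / t ^ 2) 2 6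
               = RInt (fun t => g1 t / t ^ 2) 2 6 - RInt (fun t => g2 t / t ^ 2) 2 6)
    by exact (RInt_minus _ _ 2 6 (ex_RInt_over_sq _ h1) (ex_RInt_over_sq _ h2)).
  assert (hex : ex_RInt (fun t => g1 t / t ^ 2 - g2 t / t ^ 2) 2 6)
    by (apply (ex_RInt_minus (V := R_NormedModule)); apply ex_RInt_over_sq; auto).
  assert (hpt : forall t, 2 <= t <= 6 ->
            - e / t ^ 2 <= g1 t / t ^ 2 - g2 t / t ^ 2 <= e / t ^ 2).
  { intros t ht. pose proof (he t ht) as h. apply Rabs_le_between in h.
    assert (0 < / t ^ 2) by (apply Rinv_0_lt_compat, pow_lt; lra). unfold Rdiv. nra. }
  assert (hc : forall c, ex_RInt (fun t => c / t ^ 2) 2 6)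
    by (intros c; exact (ex_RInt_over_sq (fun _ => c) (fun x => cconst c x))).
  rewrite <- hm. apply Rabs_le. split.
  - apply Rle_trans with (RInt (fun t => - e / t ^ 2) 2 6).
    + rewrite RInt_const_over_sq. lra.
    + apply RInt_le; auto; [lra|]. intros t ht. apply hpt; lra.
  - apply Rle_trans with (RInt (fun t => e / t ^ 2) 2 6).
    + apply RInt_le; auto; [lra|]. intros t ht. apply hpt; lra.
    + rewrite RInt_const_over_sq. lra.
Qed.

(* The operator whose fixed point is u = x V' - V.  The constant shift f is chosen so that
   int_2^6 (Tmap f)(t) / t^2 dt = -13/3, which encodes the boundary conditions V(2) = 9, V(6) = 1. *)
Definition shift (f : R -> R) : R := -13 - 3 * RInt (fun t => rhs_int f t / t ^ 2) 2 6.
Definition Tmap (f : R -> R) (x : R) : R := shift f + rhs_int f x.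

(* The shift stays in [-19, -13] since 0 <= rhs_int f <= 6. *)
Lemma shift_bounds f : contR f -> -19 <= shift f <= -13.
Proof.
  intros hf. unfold shift.
  assert (H := RInt_over_sq_diff (rhs_int f) (fun _ => 3) 3 (rhs_int_cont f hf) (fun x => cconst 3 x)
                 ltac:(intros t _; apply Rabs_le; pose proof (rhs_int_bounds f t hf); lra)).
  cbv beta in H. rewrite RInt_const_over_sq in H. apply Rabs_le_between in H. lra.
Qed.

Lemma Tmap_bounds f x : contR f -> -19 <= Tmap f x <= -7.
Proof.
  intros hf. unfold Tmap. pose proof (shift_bounds f hf). pose proof (rhs_int_bounds f x hf). lra.
Qed.

Lemma Tmap_lip f x y : contR f -> Rabs (Tmap f y - Tmap f x) <= 36 * Rabs (y - x).
Proof.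
  intros hf. unfold Tmap. replace (shift f + rhs_int f y - (shift f + rhs_int f x))
    with (rhs_int f y - rhs_int f x) by ring. apply rhs_int_lip; auto.
Qed.

Lemma Tmap_contr f1 f2 e x : contR f1 -> contR f2 -> (forall t, Rabs (f1 t - f2 t) <= e) ->
  Rabs (Tmap f1 x - Tmap f2 x) <= 8 / 9 * e.
Proof.
  intros h1 h2 he. unfold Tmap, shift.
  pose proof (RInt_over_sq_diff (rhs_int f1) (rhs_int f2) (4 * e / 9) (rhs_int_cont f1 h1)
                (rhs_int_cont f2 h2) ltac:(intros t _; apply rhs_int_contr; auto)).
  pose proof (rhs_int_contr f1 f2 x e h1 h2 he).
  set (I1 := RInt (fun t => rhs_int f1 t / t ^ 2) 2 6) in *.
  set (I2 := RInt (fun t => rhs_int f2 t / t ^ 2) 2 6) in *.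
  replace (-13 - 3 * I1 + rhs_int f1 x - (-13 - 3 * I2 + rhs_int f2 x))
    with ((-3) * (I1 - I2) + (rhs_int f1 x - rhs_int f2 x)) by ring.
  eapply Rle_trans; [apply Rabs_triang|]. rewrite Rabs_mult, Rabs_left by lra. lra.
Qed.

(* Banach's fixed point theorem for an operator Phi on continuous functions which is bounded by M,
   maps into L-Lipschitz functions and contracts the sup distance by the factor k < 1.  The fixed
   point is the pointwise limit of the Picard iterates started at 0. *)
Section FixedPoint.

Variable Phi : (R -> R) -> (R -> R).
Variables k M L : R.
Hypothesis k_range : 0 <= k < 1.
Hypothesis L_nonneg : 0 <= L.
Hypothesis Phi_bound : forall f x, contR f -> Rabs (Phi f x) <= M.
Hypothesis Phi_lip : forall f x y, contR f -> Rabs (Phi f y - Phi f x) <= L * Rabs (y - x).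
Hypothesis Phi_contr : forall f1 f2 e x, contR f1 -> contR f2 ->
  (forall t, Rabs (f1 t - f2 t) <= e) -> Rabs (Phi f1 x - Phi f2 x) <= k * e.

Definition picard (n : nat) : R -> R := Nat.iter n Phi (fun _ => 0).

Lemma picard_S n : picard (S n) = Phi (picard n).
Proof. reflexivity. Qed.

Lemma picard_lip n x y : Rabs (picard n y - picard n x) <= L * Rabs (y - x).
Proof.
  destruct n as [|n].
  - simpl. rewrite Rminus_0_r, Rabs_R0. apply Rmult_le_pos; [lra | apply Rabs_pos].
  - rewrite picard_S. apply Phi_lip. induction n as [|n IH]; intros z; [apply cconst|].
    rewrite picard_S. apply (lip_cont _ _ L); auto.
Qed.

Lemma picard_cont n : contR (picard n).
Proof. intros x. apply (lip_cont _ _ L); auto. intros; apply picard_lip. Qed.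

Lemma pow_k_nonneg n : 0 <= k ^ n.
Proof. apply pow_le; lra. Qed.

Lemma M_nonneg : 0 <= M.
Proof.
  pose proof (Phi_bound (fun _ => 0) 0 (fun x => cconst 0 x)).
  pose proof (Rabs_pos (Phi (fun _ => 0) 0)). lra.
Qed.

Lemma picard_step n x : Rabs (picard (S n) x - picard n x) <= M * k ^ n.
Proof.
  revert x. induction n as [|n IH]; intros x.
  - simpl pow. rewrite Rmult_1_r, picard_S. simpl (picard 0 x). rewrite Rminus_0_r.
    apply Phi_bound, picard_cont.
  - change (Rabs (Phi (picard (S n)) x - Phi (picard n) x) <= M * k ^ S n). eapply Rle_trans.
    + apply (Phi_contr _ _ (M * k ^ n)); [apply picard_cont | apply picard_cont | apply IH].
    + simpl pow. right; ring.
Qed.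

Lemma picard_cauchy n m x : (n <= m)%nat -> Rabs (picard m x - picard n x) <= M / (1 - k) * k ^ n.
Proof.
  intros h. replace m with (n + (m - n))%nat by lia. generalize (m - n)%nat as j.
  assert (hC : forall j, Rabs (picard (n + j) x - picard n x) <= M / (1 - k) * k ^ n * (1 - k ^ j)).
  { induction j as [|j IH].
    - rewrite Nat.add_0_r, Rminus_eq_0, Rabs_R0. simpl. lra.
    - replace (n + S j)%nat with (S (n + j)) by lia.
      pose proof (picard_step (n + j) x) as hs. rewrite pow_add in hs.
      replace (picard (S (n + j)) x - picard n x)
        with ((picard (S (n + j)) x - picard (n + j) x) + (picard (n + j) x - picard n x)) by ring.
      eapply Rle_trans; [apply Rabs_triang|].
      replace (M / (1 - k) * k ^ n * (1 - k ^ S j))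
        with (M * (k ^ n * k ^ j) + M / (1 - k) * k ^ n * (1 - k ^ j)) by (simpl; field; lra).
      lra. }
  intros j. eapply Rle_trans; [apply hC|].
  pose proof (pow_k_nonneg n). pose proof (pow_k_nonneg j). pose proof M_nonneg.
  assert (0 <= M / (1 - k)) by (apply Rdiv_le_0_compat; lra).
  rewrite <- (Rmult_1_r (M / (1 - k) * k ^ n)) at 2. apply Rmult_le_compat_l; [nra | lra].
Qed.

Lemma le_of_le_geometric A B K : 0 <= K -> (forall n, A <= B + K * k ^ n) -> A <= B.
Proof.
  intros hK H. apply Rnot_lt_le. intro h.
  destruct (pow_lt_1_zero k ltac:(rewrite Rabs_right; lra) ((A - B) / (K + 1))) as [N HN];
    [apply Rdiv_lt_0_compat; lra|].
  specialize (HN N (le_n N)). rewrite Rabs_right in HN by (apply Rle_ge, pow_k_nonneg).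
  specialize (H N). pose proof (pow_k_nonneg N).
  assert ((K + 1) * k ^ N < A - B).
  { apply Rmult_lt_reg_r with (/ (K + 1)); [apply Rinv_0_lt_compat; lra|].
    replace ((K + 1) * k ^ N * / (K + 1)) with (k ^ N) by (field; lra). exact HN. }
  nra.
Qed.

Lemma picard_ex_lim x : ex_finite_lim_seq (fun n => picard n x).
Proof.
  apply ex_lim_seq_cauchy_corr. intros eps.
  set (C := M / (1 - k)). assert (0 <= C) by (apply Rdiv_le_0_compat; [apply M_nonneg | lra]).
  destruct (pow_lt_1_zero k ltac:(rewrite Rabs_right; lra) (eps / (2 * C + 1))) as [N HN];
    [apply Rdiv_lt_0_compat; [apply cond_pos | lra]|].
  exists N. intros n m hn hm.
  pose proof (picard_cauchy N n x hn). pose proof (picard_cauchy N m x hm).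
  specialize (HN N (le_n N)). rewrite Rabs_right in HN by (apply Rle_ge, pow_k_nonneg).
  assert ((2 * C + 1) * k ^ N < eps).
  { apply Rmult_lt_reg_r with (/ (2 * C + 1)); [apply Rinv_0_lt_compat; lra|].
    replace ((2 * C + 1) * k ^ N * / (2 * C + 1)) with (k ^ N) by (field; lra). exact HN. }
  replace (picard n x - picard m x) with ((picard n x - picard N x) - (picard m x - picard N x)) by ring.
  eapply Rle_lt_trans; [apply Rabs_triang|]. rewrite Rabs_Ropp. pose proof (pow_k_nonneg N).
  fold C in H0, H1. nra.
Qed.

Definition fixed_point (x : R) : R := real (Lim_seq (fun n => picard n x)).

Lemma fixed_point_lim x : is_lim_seq (fun n => picard n x) (fixed_point x).
Proof.
  destruct (picard_ex_lim x) as [l hl]. unfold fixed_point.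
  rewrite (is_lim_seq_unique _ _ hl). exact hl.
Qed.

Lemma fixed_point_err n x : Rabs (fixed_point x - picard n x) <= M / (1 - k) * k ^ n.
Proof.
  apply Rabs_le. split.
  - assert (H : Rbar_le (picard n x - M / (1 - k) * k ^ n) (fixed_point x)); [|simpl in H; lra].
    apply (is_lim_seq_le_loc (fun _ => picard n x - M / (1 - k) * k ^ n) (fun m => picard m x));
      [|apply is_lim_seq_const | apply fixed_point_lim].
    exists n. intros m hm. pose proof (picard_cauchy n m x hm) as h. apply Rabs_le_between in h. lra.
  - assert (H : Rbar_le (fixed_point x) (picard n x + M / (1 - k) * k ^ n)); [|simpl in H; lra].
    apply (is_lim_seq_le_loc (fun m => picard m x) (fun _ => picard n x + M / (1 - k) * k ^ n));
      [|apply fixed_point_lim | apply is_lim_seq_const].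
    exists n. intros m hm. pose proof (picard_cauchy n m x hm) as h. apply Rabs_le_between in h. lra.
Qed.

Lemma C_nonneg : 0 <= M / (1 - k).
Proof. apply Rdiv_le_0_compat; [apply M_nonneg | lra]. Qed.

Lemma fixed_point_lip x y : Rabs (fixed_point y - fixed_point x) <= L * Rabs (y - x).
Proof.
  apply (le_of_le_geometric _ _ (2 * (M / (1 - k)))); [pose proof C_nonneg; lra|]. intros n.
  pose proof (fixed_point_err n x). pose proof (fixed_point_err n y). pose proof (picard_lip n x y).
  replace (fixed_point y - fixed_point x) with
    ((fixed_point y - picard n y) + (picard n y - picard n x) - (fixed_point x - picard n x)) by ring.
  eapply Rle_trans; [apply Rabs_triang|]. rewrite Rabs_Ropp.
  eapply Rle_trans; [apply Rplus_le_compat_r, Rabs_triang|]. lra.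
Qed.

Lemma fixed_point_cont : contR fixed_point.
Proof. intros x. apply (lip_cont _ _ L); auto. intros; apply fixed_point_lip. Qed.

(* The limit is a fixed point: Phi fixed_point is within k C k^n + C k^(n+1) of it for all n. *)
Lemma fixed_point_eq x : Phi fixed_point x = fixed_point x.
Proof.
  assert (H : Rabs (Phi fixed_point x - fixed_point x) <= 0).
  { apply (le_of_le_geometric _ _ (2 * (M / (1 - k)))); [pose proof C_nonneg; lra|]. intros n.
    pose proof (Phi_contr fixed_point (picard n) _ x fixed_point_cont (picard_cont n)
                  (fun t => fixed_point_err n t)).
    pose proof (fixed_point_err (S n) x). rewrite picard_S in H0. simpl pow in H0.
    replace (Phi fixed_point x - fixed_point x) with
      ((Phi fixed_point x - Phi (picard n) x) - (fixed_point x - Phi (picard n) x)) by ring.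
    eapply Rle_trans; [apply Rabs_triang|]. rewrite Rabs_Ropp.
    assert (k * (M / (1 - k) * k ^ n) <= M / (1 - k) * k ^ n).
    { pose proof (pow_k_nonneg n). pose proof C_nonneg.
      rewrite <- (Rmult_1_l (M / (1 - k) * k ^ n)) at 2. apply Rmult_le_compat_r; [nra | lra]. }
    replace (M / (1 - k) * (k * k ^ n)) with (k * (M / (1 - k) * k ^ n)) in H0 by ring. lra. }
  pose proof (Rabs_pos (Phi fixed_point x - fixed_point x)).
  assert (Rabs (Phi fixed_point x - fixed_point x) = 0) by lra.
  apply Rabs_eq_0 in H1. lra.
Qed.

End FixedPoint.

(* u_star: the fixed point of Tmap; it will be x V' - V for the solution V. *)
Definition u_star : R -> R := fixed_point Tmap.

Lemma Tmap_abs_bound f x : contR f -> Rabs (Tmap f x) <= 19.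
Proof. intros hf. apply Rabs_le. pose proof (Tmap_bounds f x hf). lra. Qed.

Lemma u_star_fixed x : Tmap u_star x = u_star x.
Proof.
  apply (fixed_point_eq Tmap (8 / 9) 19 36); try lra.
  - apply Tmap_abs_bound.
  - apply Tmap_lip.
  - apply Tmap_contr.
Qed.

Lemma u_star_lip x y : Rabs (u_star y - u_star x) <= 36 * Rabs (y - x).
Proof.
  apply (fixed_point_lip Tmap (8 / 9) 19 36); try lra.
  - apply Tmap_abs_bound.
  - apply Tmap_lip.
  - apply Tmap_contr.
Qed.

Lemma u_star_cont : contR u_star.
Proof. intros x. apply (lip_cont _ _ 36); [lra|]. intros; apply u_star_lip. Qed.

Lemma u_star_bounds x : -19 <= u_star x <= -7.
Proof. rewrite <- u_star_fixed. apply Tmap_bounds, u_star_cont. Qed.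

(* The candidate solution, recovered from u = x V' - V through (V/x)' = u/x^2:
   V_star x = x (9/2 + int_2^x u/t^2), with derivative D_star. *)
Definition u_over_sq (t : R) : R := u_star t / t ^ 2.
Definition V_star (x : R) : R := x * (9 / 2 + RInt u_over_sq 2 x).
Definition D_star (x : R) : R := 9 / 2 + RInt u_over_sq 2 x + u_star x / x.

Lemma u_over_sq_cont t : t <> 0 -> continuous u_over_sq t.
Proof. intros h. apply cdiv; [apply u_star_cont | apply cpow, cid | apply pow_nonzero; auto]. Qed.

Lemma ex_RInt_u_over_sq a b : 0 < a -> 0 < b -> ex_RInt u_over_sq a b.
Proof.
  intros ha hb. apply (ex_RInt_continuous (V := R_CompleteNormedModule)). intros z hz.
  apply u_over_sq_cont. assert (0 < Rmin a b) by (apply Rmin_glb_lt; auto). lra.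
Qed.

(* The normalisation built into Tmap. *)
Lemma RInt_u_over_sq : RInt u_over_sq 2 6 = -13 / 3.
Proof.
  set (s := shift u_star).
  assert (h1 : RInt u_over_sq 2 6 = RInt (fun t => s / t ^ 2 + rhs_int u_star t / t ^ 2) 2 6).
  { apply RInt_ext. intros x hx. rewrite Rmin_left, Rmax_right in hx by lra.
    change (u_star x / x ^ 2 = s / x ^ 2 + rhs_int u_star x / x ^ 2).
    rewrite <- u_star_fixed. unfold Tmap. fold s. field. lra. }
  assert (h2 : RInt (fun t => s / t ^ 2 + rhs_int u_star t / t ^ 2) 2 6
               = RInt (fun t => s / t ^ 2) 2 6 + RInt (fun t => rhs_int u_star t / t ^ 2) 2 6)
    by exact (RInt_plus _ _ 2 6 (ex_RInt_over_sq (fun _ => s) (fun x => cconst s x))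
                (ex_RInt_over_sq _ (rhs_int_cont _ u_star_cont))).
  rewrite h1, h2, RInt_const_over_sq. unfold s, shift. lra.
Qed.

Lemma V_star_2 : V_star 2 = 9.
Proof. unfold V_star. rewrite RInt_point. unfold zero; simpl. field. Qed.

Lemma V_star_6 : V_star 6 = 1.
Proof. unfold V_star. rewrite RInt_u_over_sq. field. Qed.

Lemma V_star_u x : 0 < x -> x * D_star x - V_star x = u_star x.
Proof. intros h. unfold D_star, V_star. field. lra. Qed.

Lemma RInt_u_over_sq_der x : 0 < x -> is_derive (fun y => RInt u_over_sq 2 y) x (u_over_sq x).
Proof.
  intros h. apply (is_derive_RInt (V := R_NormedModule) u_over_sq (fun y => RInt u_over_sq 2 y) 2 x).
  - apply (locally_of_ball x (x / 2)); [lra|]. intros y hy. apply Rabs_lt_between in hy.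
    apply (RInt_correct (V := R_CompleteNormedModule)), ex_RInt_u_over_sq; lra.
  - apply u_over_sq_cont; lra.
Qed.

Lemma is_derive_eq (f : R -> R) x l l' : is_derive f x l -> l = l' -> is_derive f x l'.
Proof. intros H ->; auto. Qed.

Lemma V_star_der x : 0 < x -> is_derive V_star x (D_star x).
Proof.
  intros h. unfold V_star.
  assert (H := is_derive_mult (K := R_AbsRing) (fun y => y) (fun y => 9 / 2 + RInt u_over_sq 2 y)
     x 1 (0 + u_over_sq x) (is_derive_id (K := R_AbsRing) x)
     (is_derive_plus (K := R_AbsRing) (V := R_NormedModule) (fun _ => 9 / 2) _ x 0 _
        (is_derive_const (K := R_AbsRing) (V := R_NormedModule) _ x) (RInt_u_over_sq_der x h))
     ltac:(intros; apply Rmult_comm)).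
  apply (is_derive_eq _ _ _ _ H). unfold plus, mult; simpl. unfold D_star, u_over_sq. field. lra.
Qed.

(* Inside a piece (k, k+1) only the k-th piece integral varies. *)
Lemma rhs_int_der f k x : (k = 2 \/ k = 3 \/ k = 4 \/ k = 5) -> k < x < k + 1 -> contR f ->
  is_derive (rhs_int f) x (rhs k x (f x)).
Proof.
  intros hk hx hf. unfold rhs_int.
  assert (D : forall j, (j = 2 \/ j = 3 \/ j = 4 \/ j = 5) ->
            is_derive (fun y => piece_int f j y) x (if Req_EM_T k j then rhs k x (f x) else 0)).
  { intros j hj. destruct (Req_EM_T k j) as [<- | hne].
    - apply piece_int_der; auto; lra.
    - apply piece_int_der_out; lra. }
  assert (H := is_derive_plus (K := R_AbsRing) (V := R_NormedModule) _ _ x _ _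
    (is_derive_plus (K := R_AbsRing) (V := R_NormedModule) _ _ x _ _
      (is_derive_plus (K := R_AbsRing) (V := R_NormedModule) _ _ x _ _
         (D 2 ltac:(lra)) (D 3 ltac:(lra))) (D 4 ltac:(lra))) (D 5 ltac:(lra))).
  apply (is_derive_eq _ _ _ _ H). unfold plus; simpl.
  destruct (Req_EM_T k 2); destruct (Req_EM_T k 3); destruct (Req_EM_T k 4);
    destruct (Req_EM_T k 5); lra.
Qed.

Lemma u_star_der k x : (k = 2 \/ k = 3 \/ k = 4 \/ k = 5) -> k < x < k + 1 ->
  is_derive u_star x (rhs k x (u_star x)).
Proof.
  intros hk hx.
  apply (is_derive_ext (fun y => shift u_star + rhs_int u_star y)); [intros; apply u_star_fixed|].
  apply (is_derive_eq _ _ (plus 0 (rhs k x (u_star x)))); [|unfold plus; simpl; ring].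
  apply (is_derive_plus (K := R_AbsRing) (V := R_NormedModule));
    [apply (is_derive_const (K := R_AbsRing) (V := R_NormedModule)) | apply rhs_int_der; auto].
  apply u_star_cont.
Qed.

(* On a piece, D_star' = pos_root(x, -k u_star x): this is where the equation comes from. *)
Lemma D_star_der k x : (k = 2 \/ k = 3 \/ k = 4 \/ k = 5) -> k < x < k + 1 ->
  is_derive D_star x (pos_root x (- k * u_star x)).
Proof.
  intros hk hx. unfold D_star.
  assert (Hq := is_derive_mult (K := R_AbsRing) u_star (fun y => / y) x _ _ (u_star_der k x hk hx)
     (is_derive_inv (fun y => y) x 1 (is_derive_id (K := R_AbsRing) x) ltac:(simpl; lra))
     ltac:(intros; apply Rmult_comm)).
  assert (H := is_derive_plus (K := R_AbsRing) (V := R_NormedModule) _ _ x _ _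
     (is_derive_plus (K := R_AbsRing) (V := R_NormedModule) (fun _ => 9 / 2) _ x _ _
        (is_derive_const (K := R_AbsRing) (V := R_NormedModule) _ x) (RInt_u_over_sq_der x ltac:(lra)))
     Hq).
  apply (is_derive_eq _ _ _ _ H). unfold plus, mult; simpl. unfold u_over_sq, rhs.
  rewrite clamp_id by lra. rewrite clamp_id by (pose proof (u_star_bounds x); lra).
  unfold zero; simpl. field. lra.
Qed.

Lemma deriv_within_of_lim a b f x l : derivable_pt_lim f x l -> deriv_within a b f x l.
Proof.
  intros H eps he. destruct (H eps he) as [d hd]. exists d. split; [apply cond_pos|].
  intros y _ hne hy. specialize (hd (y - x) ltac:(intro; apply hne; lra) hy).
  replace (x + (y - x)) with y in hd by ring. exact hd.
Qed.

Lemma rsum_le (f g : nat -> R) n : (forall i, (i < n)%nat -> f i <= g i) -> rsum f n <= rsum g n.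
Proof.
  induction n; simpl; intros H; [lra|].
  apply Rplus_le_compat; [apply IHn; intros; apply H; lia | apply H; lia].
Qed.

Lemma rsum_scal (f : nat -> R) c n : rsum (fun i => c * f i) n = c * rsum f n.
Proof. induction n; simpl; [ring | rewrite IHn; ring]. Qed.

Lemma rsum_plus (f g : nat -> R) n : rsum (fun i => f i + g i) n = rsum f n + rsum g n.
Proof. induction n; simpl; [ring | rewrite IHn; ring]. Qed.

Lemma lip_abs_continuous a b f L : 0 < L ->
  (forall x y, a <= x <= b -> a <= y <= b -> Rabs (f y - f x) <= L * Rabs (y - x)) ->
  abs_continuous_on a b f.
Proof.
  intros hL H eps he. exists (eps / L). split; [apply Rdiv_lt_0_compat; auto|].
  intros n u v hin _ hs.
  apply Rle_lt_trans with (rsum (fun i => L * (v i - u i)) n).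
  - apply rsum_le. intros i hi. destruct (hin i hi) as [h1 [h2 h3]].
    rewrite <- (Rabs_right (v i - u i)) by lra. apply H; lra.
  - rewrite rsum_scal. apply Rmult_lt_reg_r with (/ L); [apply Rinv_0_lt_compat; auto|].
    replace (L * rsum (fun i => v i - u i) n * / L) with (rsum (fun i => v i - u i) n) by (field; lra).
    exact hs.
Qed.

Lemma lip_continuous_on a b f L : 0 < L ->
  (forall x y, a <= x <= b -> a <= y <= b -> Rabs (f y - f x) <= L * Rabs (y - x)) ->
  Defs.continuous_on a b f.
Proof.
  intros hL H x hx eps he. exists (eps / L). split; [apply Rdiv_lt_0_compat; auto|].
  intros y hy hyx. eapply Rle_lt_trans; [apply H; auto|].
  apply Rmult_lt_reg_r with (/ L); [apply Rinv_0_lt_compat; auto|].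
  replace (L * Rabs (y - x) * / L) with (Rabs (y - x)) by (field; lra). exact hyx.
Qed.

Lemma D_star_lip x y : 2 <= x <= 6 -> 2 <= y <= 6 -> Rabs (D_star y - D_star x) <= 40 * Rabs (y - x).
Proof.
  intros hx hy. unfold D_star.
  assert (hc : RInt u_over_sq 2 y - RInt u_over_sq 2 x = RInt u_over_sq x y).
  { rewrite <- (RInt_Chasles (V := R_CompleteNormedModule) u_over_sq 2 x y)
      by (apply ex_RInt_u_over_sq; lra). unfold plus; simpl. ring. }
  assert (h1 : Rabs (RInt u_over_sq x y) <= 5 * Rabs (y - x)).
  { apply abs_RInt_bound; [apply ex_RInt_u_over_sq; lra|]. intros t ht. unfold u_over_sq.
    assert (2 <= t) by (assert (2 <= Rmin x y) by (apply Rmin_glb; lra); lra).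
    pose proof (u_star_bounds t). assert (4 <= t ^ 2) by nra.
    unfold Rdiv. rewrite Rabs_mult, Rabs_inv, (Rabs_right (t ^ 2)) by lra.
    apply Rle_trans with (19 * / 4); [|lra].
    apply Rmult_le_compat; [apply Rabs_pos | apply Rlt_le, Rinv_0_lt_compat; lra
                           | apply Rabs_le; lra | apply Rinv_le_contravar; lra]. }
  assert (h2 : Rabs (u_star y / y - u_star x / x) <= 25 * Rabs (y - x)).
  { replace (u_star y / y - u_star x / x) with ((u_star y - u_star x) / y + u_star x * (x - y) / (x * y))
      by (field; split; lra).
    eapply Rle_trans; [apply Rabs_triang|].
    pose proof (u_star_lip x y). pose proof (u_star_bounds x). pose proof (Rabs_pos (y - x)).
    assert (Rabs ((u_star y - u_star x) / y) <= 18 * Rabs (y - x)).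
    { unfold Rdiv. rewrite Rabs_mult, Rabs_inv, (Rabs_right y) by lra.
      assert (/ y <= / 2) by (apply Rinv_le_contravar; lra).
      assert (0 < / y) by (apply Rinv_0_lt_compat; lra).
      pose proof (Rabs_pos (u_star y - u_star x)). nra. }
    assert (Rabs (u_star x * (x - y) / (x * y)) <= 5 * Rabs (y - x)).
    { unfold Rdiv. rewrite !Rabs_mult, Rabs_inv, (Rabs_right (x * y)), (Rabs_minus_sym x y) by nra.
      assert (Rabs (u_star x) <= 19) by (apply Rabs_le; lra).
      assert (/ (x * y) <= / 4) by (apply Rinv_le_contravar; nra).
      assert (0 < / (x * y)) by (apply Rinv_0_lt_compat; nra).
      pose proof (Rabs_pos (u_star x)).
      set (A := Rabs (u_star x)) in *. set (B := Rabs (y - x)) in *. set (s := / (x * y)) in *.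
      assert (A * s <= 19 / 4) by nra. replace (A * B * s) with ((A * s) * B) by ring. nra. }
    lra. }
  replace (9 / 2 + RInt u_over_sq 2 y + u_star y / y - (9 / 2 + RInt u_over_sq 2 x + u_star x / x))
    with ((RInt u_over_sq 2 y - RInt u_over_sq 2 x) + (u_star y / y - u_star x / x)) by ring.
  rewrite hc. eapply Rle_trans; [apply Rabs_triang|]. pose proof (Rabs_pos (y - x)). lra.
Qed.

(* The exceptional points: the integers of [2, 6], where q jumps. *)
Definition integer_points (x : R) : Prop := x = 2 \/ x = 3 \/ x = 4 \/ x = 5 \/ x = 6.

Lemma null_point c : null_set (fun x => x = c).
Proof.
  intros eps he. exists (fun k => if Nat.eqb k 0 then c - eps / 4 else c).
  exists (fun k => if Nat.eqb k 0 then c + eps / 4 else c).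
  split; [intros k; destruct (Nat.eqb k 0); lra|].
  split; [intros x ->; exists 0%nat; simpl; lra|].
  assert (H : forall n, rsum (fun k => (if Nat.eqb k 0 then c + eps / 4 else c)
                                     - (if Nat.eqb k 0 then c - eps / 4 else c)) n <= eps / 2).
  { induction n; [simpl; lra|]. simpl rsum. destruct n; [simpl; lra|].
    replace (Nat.eqb (S n) 0) with false by reflexivity. lra. }
  intros n. specialize (H n). lra.
Qed.

Lemma integer_points_null : null_set integer_points.
Proof.
  unfold integer_points.
  repeat (apply (null_union (fun x => x = _)); [apply null_point|]). apply null_point.
Qed.

Lemma piece_of x : 2 <= x <= 6 -> ~ integer_points x ->
  exists k, (k = 2 \/ k = 3 \/ k = 4 \/ k = 5) /\ k < x < k + 1.
Proof.
  intros hx hE. unfold integer_points in hE.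
  destruct (Rlt_le_dec x 3); [exists 2 | destruct (Rlt_le_dec x 4); [exists 3 |
    destruct (Rlt_le_dec x 5); [exists 4 | exists 5]]]; (split; [lra|]);
    destruct (Req_dec x 2); destruct (Req_dec x 3); destruct (Req_dec x 4);
    destruct (Req_dec x 5); destruct (Req_dec x 6); try tauto; lra.
Qed.

Lemma q_on_piece k x : (k = 2 \/ k = 3 \/ k = 4 \/ k = 5) -> k < x < k + 1 -> q x = k.
Proof.
  intros hk hx. unfold q, Int_part.
  assert (H : forall z : Z, IZR z = k -> IZR (up x - 1) = k).
  { intros z hz. rewrite <- (tech_up x (z + 1)); rewrite ?minus_IZR, ?plus_IZR; simpl; lra. }
  destruct hk as [-> | [-> | [-> | ->]]];
    [apply (H 2%Z) | apply (H 3%Z) | apply (H 4%Z) | apply (H 5%Z)]; reflexivity.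
Qed.

Lemma q_bounds x : 2 <= x <= 6 -> 2 <= q x <= 6.
Proof.
  intros hx. unfold q. destruct (base_Int_part x) as [h1 h2].
  assert (IZR 1 < IZR (Int_part x)) by (simpl; lra). apply lt_IZR in H.
  assert (2 <= Int_part x)%Z by lia. apply IZR_le in H0. simpl in H0. lra.
Qed.

Lemma D_star_equation x : 2 <= x <= 6 -> ~ integer_points x ->
  exists w, derivable_pt_lim D_star x w /\ 0 <= w /\
    x ^ 3 * w ^ 2 + p x * x ^ 2 * w + q x * (x * D_star x - V_star x) = 0.
Proof.
  intros hx hE. destruct (piece_of x hx hE) as [k [hk hkx]].
  exists (pos_root x (- k * u_star x)). pose proof (u_star_bounds x).
  split; [apply is_derive_Reals, D_star_der; auto|].
  split; [apply pos_root_nonneg; nra|].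
  rewrite (q_on_piece k x hk hkx), V_star_u by lra.
  pose proof (pos_root_eq x (- k * u_star x) ltac:(lra) ltac:(nra)). nra.
Qed.

Lemma D_star_nondecreasing x y : 2 <= x -> x <= y -> y <= 6 -> D_star x <= D_star y.
Proof.
  intros h1 h2 h3. apply (nondecreasing_of_ae_deriv x y D_star integer_points h2 integer_points_null).
  - apply ac_on_tags_of_ac, (lip_abs_continuous _ _ _ 40); [lra|]. intros; apply D_star_lip; lra.
  - intros z hz hE. destruct (D_star_equation z ltac:(lra) hE) as [w [hd [hw _]]].
    exists w; split; auto. apply deriv_within_of_lim; auto.
Qed.

(* V_star lies above its tangent lines, since its derivative is nondecreasing (mean value theorem). *)
Lemma V_star_tangent s z : 2 <= s <= 6 -> 2 <= z <= 6 -> V_star z + D_star z * (s - z) <= V_star s.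
Proof.
  intros hs hz. assert (2 <= Rmin z s) by (apply Rmin_glb; lra).
  destruct (MVT_gen V_star z s D_star) as [c [hc hm]].
  - intros x hx. apply V_star_der. lra.
  - intros x hx. apply continuity_pt_filterlim.
    apply (ex_derive_continuous (K := R_AbsRing) (V := R_NormedModule)).
    exists (D_star x). apply V_star_der. lra.
  - destruct (Rle_dec z s).
    + rewrite Rmin_left, Rmax_right in hc by lra.
      assert (D_star z <= D_star c) by (apply D_star_nondecreasing; lra). nra.
    + rewrite Rmin_right, Rmax_left in hc by lra.
      assert (D_star c <= D_star z) by (apply D_star_nondecreasing; lra). nra.
Qed.

(* The data shared by all convex solutions that the comparison principle uses: V is C^1 with
   absolutely continuous derivative D, and off the null set N, D has a derivative w >= 0
   solving the equation. *)
Definition admissible (V D : R -> R) (N : R -> Prop) : Prop :=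
  C1_with_deriv 2 6 V D /\ abs_continuous_on 2 6 D /\ null_set N /\
  (forall x, 2 < x < 6 -> ~ N x -> exists w, derivable_pt_lim D x w /\ 0 <= w /\
     x ^ 3 * w ^ 2 + p x * x ^ 2 * w + q x * (x * D x - V x) = 0).

Lemma V_star_admissible : admissible V_star D_star integer_points.
Proof.
  split; [|split; [|split]].
  - split.
    + intros x hx. unfold in_cc in hx. apply deriv_within_of_lim, is_derive_Reals, V_star_der. lra.
    + apply (lip_continuous_on _ _ _ 40); [lra|]. intros; apply D_star_lip; auto.
  - apply (lip_abs_continuous _ _ _ 40); [lra|]. intros; apply D_star_lip; auto.
  - apply integer_points_null.
  - intros x hx hE. apply D_star_equation; auto. lra.
Qed.

Lemma V_star_solution : is_solution V_star.
Proof.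
  destruct V_star_admissible as [hC1 [hac _]].
  exists D_star.
  split; [exact hC1 | split; [exact hac | split; [|split; [apply V_star_2 | apply V_star_6]]]].
  exists integer_points. split; [apply integer_points_null|]. intros x hx hE.
  destruct (D_star_equation x hx hE) as [w [h1 [_ h3]]]. exists w; auto.
Qed.

Lemma V_star_convex : convex_on 2 6 V_star.
Proof.
  intros x y t hx hy ht. unfold in_cc in *. set (z := t * x + (1 - t) * y).
  assert (hz : 2 <= z <= 6) by (unfold z; split; nra).
  pose proof (V_star_tangent x z hx hz). pose proof (V_star_tangent y z hy hz).
  assert (t * (V_star z + D_star z * (x - z)) <= t * V_star x) by (apply Rmult_le_compat_l; lra).
  assert ((1 - t) * (V_star z + D_star z * (y - z)) <= (1 - t) * V_star y)
    by (apply Rmult_le_compat_l; lra).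
  assert (t * (V_star z + D_star z * (x - z)) + (1 - t) * (V_star z + D_star z * (y - z)) = V_star z)
    by (unfold z; ring).
  lra.
Qed.

(* The bounds come from the tangents at the end points, u_star in [-19, -7] fixing the end
   slopes, and the chord between (2, 9) and (6, 1). *)
Lemma V_star_in_interval : in_fun_interval 2 6 lower_fn upper_fn V_star.
Proof.
  intros x hx. unfold in_cc in hx. unfold lower_fn, upper_fn.
  assert (h2 := V_star_tangent x 2 hx ltac:(lra)). assert (h6 := V_star_tangent x 6 hx ltac:(lra)).
  assert (hx2 := V_star_tangent 2 x ltac:(lra) hx). assert (hx6 := V_star_tangent 6 x ltac:(lra) hx).
  rewrite V_star_2 in h2, hx2. rewrite V_star_6 in h6, hx6.
  assert (hD2 := V_star_u 2 ltac:(lra)). assert (hD6 := V_star_u 6 ltac:(lra)).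
  rewrite V_star_2 in hD2. rewrite V_star_6 in hD6.
  pose proof (u_star_bounds 2). pose proof (u_star_bounds 6).
  split.
  - apply Rmax_lub; [nra | destruct (Rle_dec x 5.5); nra].
  - assert ((6 - x) / 4 * (V_star x + D_star x * (2 - x)) + (x - 2) / 4 * (V_star x + D_star x * (6 - x))
            = V_star x) by field.
    assert ((6 - x) / 4 * (V_star x + D_star x * (2 - x)) <= (6 - x) / 4 * 9)
      by (apply Rmult_le_compat_l; lra).
    assert ((x - 2) / 4 * (V_star x + D_star x * (6 - x)) <= (x - 2) / 4 * 1)
      by (apply Rmult_le_compat_l; lra).
    lra.
Qed.

Theorem V_star_convex_solution : convex_solution_in V_star.
Proof. split; [apply V_star_solution | split; [apply V_star_convex | apply V_star_in_interval]]. Qed.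

Definition cont_within (a b : R) (f : R -> R) (x : R) : Prop :=
  forall eps, 0 < eps -> exists d, 0 < d /\
    forall y, a <= y <= b -> Rabs (y - x) < d -> Rabs (f y - f x) < eps.

Lemma deriv_within_cont a b f x l : deriv_within a b f x l -> cont_within a b f x.
Proof.
  intros H eps he. destruct (H 1 Rlt_0_1) as [d [hd Hd]]. pose proof (Rabs_pos l).
  exists (Rmin d (eps / (Rabs l + 1))).
  split; [apply Rmin_glb_lt; [auto | apply Rdiv_lt_0_compat; lra]|].
  intros y hy hyx. destruct (Req_dec y x) as [-> | hne]; [rewrite Rminus_eq_0, Rabs_R0; auto|].
  assert (hq := Hd y hy hne (Rlt_le_trans _ _ _ hyx (Rmin_l _ _))).
  assert (hqq : Rabs ((f y - f x) / (y - x)) <= Rabs l + 1).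
  { apply Rabs_lt_between in hq. apply Rabs_le. pose proof (Rle_abs l). pose proof (Rabs_maj2 l). lra. }
  replace (f y - f x) with ((f y - f x) / (y - x) * (y - x)) by (field; lra). rewrite Rabs_mult.
  apply Rle_lt_trans with ((Rabs l + 1) * Rabs (y - x));
    [apply Rmult_le_compat_r; [apply Rabs_pos | auto]|].
  apply Rlt_le_trans with ((Rabs l + 1) * (eps / (Rabs l + 1))); [|right; field; lra].
  apply Rmult_lt_compat_l; [lra | eapply Rlt_le_trans; [apply hyx | apply Rmin_r]].
Qed.

Lemma cont_within_clamp f x : 2 <= x <= 6 -> cont_within 2 6 f x ->
  continuous (fun y => f (clamp 2 6 y)) x.
Proof.
  intros hx H. apply continuity_pt_filterlim.
  unfold continuity_pt, continue_in, limit1_in, limit_in; simpl; unfold R_dist.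
  intros eps he. destruct (H eps he) as [d [hd Hd]]. exists d. split; auto.
  intros y [_ hy]. rewrite (clamp_id 2 6 x hx). apply Hd; [apply clamp_bounds; lra|].
  eapply Rle_lt_trans; [|apply hy]. rewrite <- (clamp_id 2 6 x hx) at 1. apply clamp_lip.
Qed.

Lemma continuous_eps h x : continuous h x -> forall eps, 0 < eps ->
  exists d, 0 < d /\ forall y, Rabs (y - x) < d -> Rabs (h y - h x) < eps.
Proof.
  intros H. apply continuity_pt_filterlim in H.
  unfold continuity_pt, continue_in, limit1_in, limit_in in H; simpl in H; unfold R_dist in H.
  intros eps he. destruct (H eps he) as [d [hd Hd]]. exists d; split; auto. intros y hy.
  destruct (Req_dec y x) as [-> | hne]; [rewrite Rminus_eq_0, Rabs_R0; auto|].
  apply Hd. split; auto. unfold D_x, no_cond. split; auto.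
Qed.

Lemma deriv_at_interior_max a b f x l : deriv_within a b f x l -> a < x < b ->
  (forall y, a <= y <= b -> f y <= f x) -> l = 0.
Proof.
  intros H hx hm. destruct (Rtotal_order l 0) as [hl | [hl | hl]]; auto; exfalso.
  - destruct (H (- l) ltac:(lra)) as [d [hd Hd]].
    set (y := x - Rmin (d / 2) ((x - a) / 2)).
    assert (h1 : 0 < Rmin (d / 2) ((x - a) / 2)) by (apply Rmin_glb_lt; lra).
    pose proof (Rmin_l (d / 2) ((x - a) / 2)). pose proof (Rmin_r (d / 2) ((x - a) / 2)).
    assert (hy : a <= y <= b) by (unfold y; lra).
    specialize (Hd y hy ltac:(unfold y; lra) ltac:(unfold y; rewrite Rabs_left; lra)).
    apply Rabs_lt_between in Hd. specialize (hm y hy).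
    assert (0 <= (f y - f x) / (y - x)); [|lra].
    replace ((f y - f x) / (y - x)) with ((f x - f y) / (x - y)) by (field; unfold y; lra).
    apply Rdiv_le_0_compat; unfold y in *; lra.
  - destruct (H l hl) as [d [hd Hd]].
    set (y := x + Rmin (d / 2) ((b - x) / 2)).
    assert (h1 : 0 < Rmin (d / 2) ((b - x) / 2)) by (apply Rmin_glb_lt; lra).
    pose proof (Rmin_l (d / 2) ((b - x) / 2)). pose proof (Rmin_r (d / 2) ((b - x) / 2)).
    assert (hy : a <= y <= b) by (unfold y; lra).
    specialize (Hd y hy ltac:(unfold y; lra) ltac:(unfold y; rewrite Rabs_right; lra)).
    apply Rabs_lt_between in Hd. specialize (hm y hy).
    assert ((f y - f x) / (y - x) <= 0); [|lra].
    replace ((f y - f x) / (y - x)) with (- ((f x - f y) / (y - x))) by (field; unfold y; lra).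
    assert (0 <= (f x - f y) / (y - x)) by (apply Rdiv_le_0_compat; unfold y in *; lra). lra.
Qed.

Lemma ratio_unit a b : 0 <= a <= b -> 0 < b -> 0 <= a / b <= 1.
Proof.
  intros hab hb. split; [apply Rdiv_le_0_compat; lra|].
  apply Rmult_le_reg_r with b; [lra|]. unfold Rdiv; rewrite Rmult_assoc, Rinv_l by lra. lra.
Qed.

Lemma convex_deriv_le_slope V D x y : convex_on 2 6 V ->
  (forall z, in_cc 2 6 z -> deriv_within 2 6 V z (D z)) -> 2 <= x -> x < y -> y <= 6 ->
  D x <= (V y - V x) / (y - x).
Proof.
  intros hc hd h1 h2 h3. set (s := (V y - V x) / (y - x)).
  assert (hs : V y - V x = s * (y - x)) by (unfold s; field; lra).
  apply Rnot_lt_le. intro hlt.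
  destruct (hd x ltac:(unfold in_cc; lra) (D x - s) ltac:(lra)) as [d [hdp Hd]].
  set (h := Rmin (d / 2) (y - x)). set (z := x + h). set (t := (y - z) / (y - x)).
  assert (h0 : 0 < h) by (apply Rmin_glb_lt; lra).
  assert (h <= d / 2 /\ h <= y - x) by (split; [apply Rmin_l | apply Rmin_r]).
  assert (ht : 0 <= t <= 1) by (unfold t, z; apply ratio_unit; lra).
  assert (hcv := hc x y t ltac:(unfold in_cc; lra) ltac:(unfold in_cc; lra) ht).
  replace (t * x + (1 - t) * y) with z in hcv by (unfold t; field; lra).
  assert (hz : V z - V x <= s * (z - x)).
  { replace (t * V x + (1 - t) * V y) with (V x + (1 - t) * (V y - V x)) in hcv by ring.
    rewrite hs in hcv.
    replace ((1 - t) * (s * (y - x))) with (s * (z - x)) in hcv by (unfold t; field; lra).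
    lra. }
  specialize (Hd z ltac:(unfold z, in_cc; lra) ltac:(unfold z; lra)
                ltac:(unfold z; rewrite Rabs_right; lra)).
  apply Rabs_lt_between in Hd.
  assert ((V z - V x) / (z - x) <= s); [|lra].
  apply Rmult_le_reg_r with (z - x); [unfold z; lra|].
  unfold Rdiv; rewrite Rmult_assoc, Rinv_l by (unfold z; lra). lra.
Qed.

Lemma convex_slope_le_deriv V D x y : convex_on 2 6 V ->
  (forall z, in_cc 2 6 z -> deriv_within 2 6 V z (D z)) -> 2 <= x -> x < y -> y <= 6 ->
  (V y - V x) / (y - x) <= D y.
Proof.
  intros hc hd h1 h2 h3. set (s := (V y - V x) / (y - x)).
  assert (hs : V y - V x = s * (y - x)) by (unfold s; field; lra).
  apply Rnot_lt_le. intro hlt.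
  destruct (hd y ltac:(unfold in_cc; lra) (s - D y) ltac:(lra)) as [d [hdp Hd]].
  set (h := Rmin (d / 2) (y - x)). set (z := y - h). set (t := (y - z) / (y - x)).
  assert (h0 : 0 < h) by (apply Rmin_glb_lt; lra).
  assert (h <= d / 2 /\ h <= y - x) by (split; [apply Rmin_l | apply Rmin_r]).
  assert (ht : 0 <= t <= 1) by (unfold t, z; apply ratio_unit; lra).
  assert (hcv := hc x y t ltac:(unfold in_cc; lra) ltac:(unfold in_cc; lra) ht).
  replace (t * x + (1 - t) * y) with z in hcv by (unfold t; field; lra).
  assert (hz : V z - V y <= - s * (y - z)).
  { replace (t * V x + (1 - t) * V y) with (V y - t * (V y - V x)) in hcv by ring.
    rewrite hs in hcv. replace (t * (s * (y - x))) with (s * (y - z)) in hcv by (unfold t; field; lra).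
    lra. }
  specialize (Hd z ltac:(unfold z, in_cc; lra) ltac:(unfold z; lra)
                ltac:(unfold z; rewrite Rabs_left; lra)).
  apply Rabs_lt_between in Hd.
  assert (s <= (V z - V y) / (z - y)); [|lra].
  apply Rmult_le_reg_r with (y - z); [unfold z; lra|].
  replace ((V z - V y) / (z - y) * (y - z)) with (- (V z - V y)) by (field; unfold z; lra). lra.
Qed.

Lemma convex_deriv_nondecreasing V D x y : convex_on 2 6 V ->
  (forall z, in_cc 2 6 z -> deriv_within 2 6 V z (D z)) -> 2 <= x -> x <= y -> y <= 6 -> D x <= D y.
Proof.
  intros hc hd h1 h2 h3. destruct (Req_dec x y) as [-> | hne]; [lra|].
  pose proof (convex_deriv_le_slope V D x y hc hd h1 ltac:(lra) h3).
  pose proof (convex_slope_le_deriv V D x y hc hd h1 ltac:(lra) h3). lra.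
Qed.

Lemma deriv_nonneg_of_nondecreasing (D : R -> R) x w r : 0 < r ->
  (forall y, x <= y <= x + r -> D x <= D y) -> derivable_pt_lim D x w -> 0 <= w.
Proof.
  intros hr hm H. apply Rnot_lt_le. intro hw. destruct (H (- w) ltac:(lra)) as [d Hd].
  pose proof (cond_pos d). set (h := Rmin (d / 2) r).
  assert (h0 : 0 < h) by (apply Rmin_glb_lt; lra).
  assert (h <= d / 2 /\ h <= r) by (split; [apply Rmin_l | apply Rmin_r]).
  specialize (Hd h ltac:(lra) ltac:(rewrite Rabs_right; lra)).
  apply Rabs_lt_between in Hd. specialize (hm (x + h) ltac:(lra)).
  assert (0 <= (D (x + h) - D x) / h) by (apply Rdiv_le_0_compat; lra). lra.
Qed.

(* Every convex solution in the interval is admissible: convexity selects the nonnegative root. *)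
Lemma convex_solution_admissible V : convex_solution_in V ->
  exists D N, admissible V D N /\ V 2 = 9 /\ V 6 = 1.
Proof.
  intros [[D [[hd hc] [hac [[N [hN hae]] [h2 h6]]]]] [hconv _]].
  exists D, N. split; [|auto]. split; [split; auto | split; [auto | split; [auto|]]].
  intros x hx hNx. destruct (hae x ltac:(unfold in_cc; lra) hNx) as [w [hw heq]].
  exists w. split; [auto | split; [|auto]].
  apply (deriv_nonneg_of_nondecreasing D x w (6 - x)); [lra | | auto].
  intros y hy. apply (convex_deriv_nondecreasing V D); auto; lra.
Qed.

Lemma deriv_within_restrict a b a' b' f x l : a <= a' -> b' <= b ->
  deriv_within a b f x l -> deriv_within a' b' f x l.
Proof.
  intros h1 h2 H eps he. destruct (H eps he) as [d [hd Hd]]. exists d; split; auto.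
  intros y hy. apply Hd. unfold in_cc in *; lra.
Qed.

Lemma deriv_within_ext a b f g x l : (forall y, f y = g y) ->
  deriv_within a b f x l -> deriv_within a b g x l.
Proof.
  intros he H eps hep. destruct (H eps hep) as [d [hd Hd]]. exists d; split; auto.
  intros y hy hne hyx. rewrite <- !he. auto.
Qed.

Lemma deriv_within_gap a b f g x l1 l2 c x0 : deriv_within a b f x l1 -> deriv_within a b g x l2 ->
  deriv_within a b (fun y => f y - g y - c / 2 * (y - x0) ^ 2) x (l1 - l2 - c * (x - x0)).
Proof.
  intros H1 H2 eps he.
  destruct (H1 (eps / 3) ltac:(lra)) as [d1 [hd1 Hd1]].
  destruct (H2 (eps / 3) ltac:(lra)) as [d2 [hd2 Hd2]].
  pose proof (Rabs_pos c). set (d3 := eps / (3 * (Rabs c + 1))).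
  assert (hd3 : 0 < d3) by (apply Rdiv_lt_0_compat; lra).
  exists (Rmin d1 (Rmin d2 d3)). split; [repeat apply Rmin_glb_lt; auto|].
  intros y hy hne hyx.
  pose proof (Rmin_l d1 (Rmin d2 d3)). pose proof (Rmin_r d1 (Rmin d2 d3)).
  pose proof (Rmin_l d2 d3). pose proof (Rmin_r d2 d3).
  specialize (Hd1 y hy hne ltac:(lra)). specialize (Hd2 y hy hne ltac:(lra)).
  replace ((f y - g y - c / 2 * (y - x0) ^ 2 - (f x - g x - c / 2 * (x - x0) ^ 2)) / (y - x)
             - (l1 - l2 - c * (x - x0)))
    with (((f y - f x) / (y - x) - l1) - ((g y - g x) / (y - x) - l2) - c / 2 * (y - x)) by (field; lra).
  assert (h3 : Rabs (c / 2 * (y - x)) < eps / 3).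
  { apply Rle_lt_trans with (Rabs c * Rabs (y - x)).
    - rewrite <- Rabs_mult. apply Rabs_le. pose proof (Rle_abs (c * (y - x))).
      pose proof (Rabs_maj2 (c * (y - x))). lra.
    - apply Rle_lt_trans with ((Rabs c + 1) * Rabs (y - x)); [pose proof (Rabs_pos (y - x)); nra|].
      apply Rlt_le_trans with ((Rabs c + 1) * d3); [apply Rmult_lt_compat_l; lra|].
      unfold d3. right. field. lra. }
  apply Rabs_lt_between in Hd1. apply Rabs_lt_between in Hd2. apply Rabs_lt_between in h3.
  apply Rabs_lt_between. lra.
Qed.

Lemma derivable_gap (DA DB : R -> R) z wA wB c : derivable_pt_lim DA z wA -> derivable_pt_lim DB z wB ->
  derivable_pt_lim (fun y => DA y - DB y - c * y) z (wA - wB - c).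
Proof.
  intros HA HB. apply is_derive_Reals. apply is_derive_Reals in HA, HB.
  assert (H1 := is_derive_minus (K := R_AbsRing) (V := R_NormedModule) _ _ z _ _ HA HB).
  assert (H2 := is_derive_scal (fun y => y) z c 1 (is_derive_id (K := R_AbsRing) z)).
  assert (H3 := is_derive_minus (K := R_AbsRing) (V := R_NormedModule) _ _ z _ _ H1 H2).
  apply (is_derive_eq _ _ _ _ H3). unfold minus, plus, opp; simpl. ring.
Qed.

Lemma abs_continuous_gap a b a' b' f g c : a <= a' -> b' <= b -> 0 <= c ->
  abs_continuous_on a b f -> abs_continuous_on a b g ->
  abs_continuous_on a' b' (fun y => f y - g y - c * y).
Proof.
  intros h1 h2 hc Hf Hg eps he.
  destruct (Hf (eps / 3) ltac:(lra)) as [d1 [hd1 Hd1]].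
  destruct (Hg (eps / 3) ltac:(lra)) as [d2 [hd2 Hd2]].
  set (d3 := eps / (3 * (c + 1))). assert (hd3 : 0 < d3) by (apply Rdiv_lt_0_compat; lra).
  exists (Rmin d1 (Rmin d2 d3)). split; [repeat apply Rmin_glb_lt; auto|].
  intros n u v hin hord hs.
  pose proof (Rmin_l d1 (Rmin d2 d3)). pose proof (Rmin_r d1 (Rmin d2 d3)).
  pose proof (Rmin_l d2 d3). pose proof (Rmin_r d2 d3).
  assert (hin' : forall i, (i < n)%nat -> a <= u i /\ u i <= v i /\ v i <= b)
    by (intros i hi; destruct (hin i hi) as [? [? ?]]; repeat split; lra).
  specialize (Hd1 n u v hin' hord ltac:(lra)). specialize (Hd2 n u v hin' hord ltac:(lra)).
  apply Rle_lt_trans with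
    (rsum (fun i => Rabs (f (v i) - f (u i)) + Rabs (g (v i) - g (u i)) + c * (v i - u i)) n).
  - apply rsum_le. intros i hi. destruct (hin i hi) as [? [? ?]].
    replace (f (v i) - g (v i) - c * v i - (f (u i) - g (u i) - c * u i))
      with ((f (v i) - f (u i)) - (g (v i) - g (u i)) - c * (v i - u i)) by ring.
    apply Rabs_le.
    pose proof (Rle_abs (f (v i) - f (u i))). pose proof (Rabs_maj2 (f (v i) - f (u i))).
    pose proof (Rle_abs (g (v i) - g (u i))). pose proof (Rabs_maj2 (g (v i) - g (u i))).
    assert (0 <= c * (v i - u i)) by nra. lra.
  - rewrite !rsum_plus, rsum_scal.
    assert (c * rsum (fun i => v i - u i) n <= c * d3) by (apply Rmult_le_compat_l; lra).
    assert (c * d3 < eps / 3).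
    { unfold d3. apply Rmult_lt_reg_r with (3 * (c + 1)); [lra|].
      replace (c * (eps / (3 * (c + 1))) * (3 * (c + 1))) with (c * eps) by (field; lra). nra. }
    lra.
Qed.

Lemma root_gap z wA wB uA uB qz m K1 K2 : 2 <= z <= 6 -> 2 <= qz <= 6 -> 0 <= wA -> 0 <= wB ->
  z ^ 3 * wA ^ 2 + p z * z ^ 2 * wA + qz * uA = 0 ->
  z ^ 3 * wB ^ 2 + p z * z ^ 2 * wB + qz * uB = 0 ->
  uA - uB <= - m / 2 -> Rabs uA <= K1 -> Rabs uB <= K2 -> 0 < m ->
  m / (36 * (K1 + K2) + 7812) <= wA - wB.
Proof.
  intros hz hq hA hB eA eB hu hK1 hK2 hm.
  unfold p in *. set (P := (1 + z ^ 3) * z ^ 2) in *.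
  assert (hz3 : 8 <= z ^ 3 <= 216).
  { split; [apply cube_ge; lra|]. assert (z ^ 3 <= 6 ^ 3) by (apply pow_incr; lra). simpl in *; lra. }
  assert (hz2 : 4 <= z ^ 2 <= 36) by (split; nra).
  assert (hP : 36 <= P <= 7812) by (unfold P; split; nra).
  apply Rabs_le_between in hK1. apply Rabs_le_between in hK2.
  assert (hwA : P * wA <= 6 * K1).
  { assert (0 <= z ^ 3 * wA ^ 2) by (apply Rmult_le_pos; nra).
    assert (- (qz * uA) <= 6 * K1) by nra. lra. }
  assert (hwB : P * wB <= 6 * K2).
  { assert (0 <= z ^ 3 * wB ^ 2) by (apply Rmult_le_pos; nra).
    assert (- (qz * uB) <= 6 * K2) by nra. lra. }
  assert (hA6 : wA <= K1 / 6).
  { apply Rmult_le_reg_l with P; [lra|]. apply Rle_trans with (6 * K1); [lra|].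
    apply Rle_trans with (36 * (K1 / 6)); [lra | apply Rmult_le_compat_r; lra]. }
  assert (hB6 : wB <= K2 / 6).
  { apply Rmult_le_reg_l with P; [lra|]. apply Rle_trans with (6 * K2); [lra|].
    apply Rle_trans with (36 * (K2 / 6)); [lra | apply Rmult_le_compat_r; lra]. }
  set (den := z ^ 3 * (wA + wB) + P).
  assert (hden : 36 <= den <= 36 * (K1 + K2) + 7812).
  { unfold den. split; [nra|]. assert (z ^ 3 * (wA + wB) <= 216 * (K1 / 6 + K2 / 6)) by nra. lra. }
  assert (heq : (wA - wB) * den = - qz * (uA - uB)) by (unfold den, P in *; nra).
  assert (hge : m <= (wA - wB) * den) by nra.
  assert (hpos : 0 < wA - wB) by nra.
  apply Rmult_le_reg_r with (36 * (K1 + K2) + 7812); [lra|].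
  replace (m / (36 * (K1 + K2) + 7812) * (36 * (K1 + K2) + 7812)) with m by (field; lra). nra.
Qed.

Lemma positive_interior_max A DA NA B DB NB x1 : admissible A DA NA -> admissible B DB NB ->
  A 2 = B 2 -> A 6 = B 6 -> 2 <= x1 <= 6 -> B x1 < A x1 ->
  exists x0, 2 < x0 < 6 /\ 0 < A x0 - B x0 /\ DA x0 = DB x0 /\
    forall y, 2 <= y <= 6 -> A y - B y <= A x0 - B x0.
Proof.
  intros [[hdA _] _] [[hdB _] _] h2 h6 hx1 hlt.
  assert (hcont : forall c, 2 <= c <= 6 ->
            continuity_pt (fun y => A (clamp 2 6 y) - B (clamp 2 6 y)) c).
  { intros c hc. apply continuity_pt_filterlim.
    apply (cminus (fun y => A (clamp 2 6 y)) (fun y => B (clamp 2 6 y)));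
      apply cont_within_clamp; auto;
      [apply (deriv_within_cont _ _ _ _ (DA c)), hdA | apply (deriv_within_cont _ _ _ _ (DB c)), hdB];
      unfold in_cc; lra. }
  destruct (continuity_ab_maj _ 2 6 ltac:(lra) hcont) as [x0 [hmax hx0]].
  assert (hmax' : forall y, 2 <= y <= 6 -> A y - B y <= A x0 - B x0)
    by (intros y hy; specialize (hmax y hy); rewrite !clamp_id in hmax; auto).
  assert (hm : 0 < A x0 - B x0) by (specialize (hmax' x1 hx1); lra).
  assert (hx0i : 2 < x0 < 6).
  { split; [destruct (Req_dec x0 2) as [-> | ] | destruct (Req_dec x0 6) as [-> | ]]; lra. }
  exists x0. repeat split; auto; try lra.
  assert (DA x0 - DB x0 = 0); [|lra].
  apply (deriv_at_interior_max 2 6 (fun y => A y - B y) x0); auto.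
  apply (deriv_within_ext _ _ (fun y => A y - B y - 0 / 2 * (y - x0) ^ 2)); [intros; field|].
  replace (DA x0 - DB x0) with (DA x0 - DB x0 - 0 * (x0 - x0)) by ring.
  apply deriv_within_gap; [apply hdA | apply hdB]; unfold in_cc; lra.
Qed.

Lemma u_gap_near A DA B DB x0 : C1_with_deriv 2 6 A DA -> C1_with_deriv 2 6 B DB ->
  2 < x0 < 6 -> DA x0 = DB x0 -> 0 < A x0 - B x0 ->
  exists d K1 K2, 0 < d /\ 0 <= K1 /\ 0 <= K2 /\ forall z, 2 <= z <= 6 -> Rabs (z - x0) < d ->
    (z * DA z - A z) - (z * DB z - B z) <= - (A x0 - B x0) / 2 /\
    Rabs (z * DA z - A z) <= K1 /\ Rabs (z * DB z - B z) <= K2.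
Proof.
  intros hA hB hx0 hD hm. set (m := A x0 - B x0) in *.
  set (UA := fun y => clamp 2 6 y * DA (clamp 2 6 y) - A (clamp 2 6 y)).
  set (UB := fun y => clamp 2 6 y * DB (clamp 2 6 y) - B (clamp 2 6 y)).
  assert (hU : forall (V D : R -> R), C1_with_deriv 2 6 V D ->
            continuous (fun y => clamp 2 6 y * D (clamp 2 6 y) - V (clamp 2 6 y)) x0).
  { intros V D [hdV hcD]. apply cminus; [apply cmult; [apply clamp_cont|] |];
      apply cont_within_clamp; try lra; [exact (hcD x0 ltac:(unfold in_cc; lra))|].
    apply (deriv_within_cont _ _ _ _ (D x0)), hdV. unfold in_cc; lra. }
  destruct (continuous_eps UA x0 (hU A DA hA) (m / 4) ltac:(lra)) as [da [hda Hda]].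
  destruct (continuous_eps UB x0 (hU B DB hB) (m / 4) ltac:(lra)) as [db [hdb Hdb]].
  assert (hU0 : UA x0 - UB x0 = - m) by (unfold UA, UB, m; rewrite clamp_id, hD by lra; ring).
  exists (Rmin da db), (Rabs (UA x0) + m / 4), (Rabs (UB x0) + m / 4).
  pose proof (Rabs_pos (UA x0)). pose proof (Rabs_pos (UB x0)).
  split; [apply Rmin_glb_lt; auto|]. split; [lra|]. split; [lra|].
  intros z hz hzx. pose proof (Rmin_l da db). pose proof (Rmin_r da db).
  specialize (Hda z ltac:(lra)). specialize (Hdb z ltac:(lra)).
  unfold UA, UB in Hda, Hdb. rewrite (clamp_id 2 6 z) in Hda, Hdb by lra.
  fold (UA x0) in Hda. fold (UB x0) in Hdb.
  apply Rabs_lt_between in Hda. apply Rabs_lt_between in Hdb.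
  pose proof (Rle_abs (UA x0)). pose proof (Rabs_maj2 (UA x0)).
  pose proof (Rle_abs (UB x0)). pose proof (Rabs_maj2 (UB x0)).
  split; [lra | split; apply Rabs_le; lra].
Qed.

(* Hence, by [root_gap], A'' - B'' >= c > 0 a.e. near x0, and DA - DB grows at least like
   c (y - x0) to the right of x0. *)
Lemma derivative_gap_grows A DA NA B DB NB x0 : admissible A DA NA -> admissible B DB NB ->
  2 < x0 < 6 -> DA x0 = DB x0 -> 0 < A x0 - B x0 ->
  exists c d0, 0 < c /\ 0 < d0 /\ x0 + d0 <= 6 /\
    forall y, x0 <= y <= x0 + d0 -> c * (y - x0) <= DA y - DB y.
Proof.
  intros [hA [hacA [hnA hwA]]] [hB [hacB [hnB hwB]]] hx0 hD hm.
  destruct (u_gap_near A DA B DB x0 hA hB hx0 hD hm) as [d [K1 [K2 [hd [hK1 [hK2 hgap]]]]]].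
  set (c := (A x0 - B x0) / (36 * (K1 + K2) + 7812)).
  assert (hc : 0 < c) by (unfold c; apply Rdiv_lt_0_compat; lra).
  set (d0 := Rmin (d / 2) ((6 - x0) / 2)).
  assert (hd0 : d0 <= d / 2 /\ d0 <= (6 - x0) / 2) by (split; [apply Rmin_l | apply Rmin_r]).
  exists c, d0. split; [exact hc|]. split; [unfold d0; apply Rmin_glb_lt; lra|]. split; [lra|].
  intros y hy.
  assert (hmono : DA x0 - DB x0 - c * x0 <= DA y - DB y - c * y).
  { apply (nondecreasing_of_ae_deriv x0 y (fun z => DA z - DB z - c * z) (fun z => NA z \/ NB z));
      [lra | apply null_union; auto | apply ac_on_tags_of_ac, (abs_continuous_gap 2 6); auto; lra|].
    intros z hz hN. apply not_or_and in hN. destruct hN as [hNA hNB].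
    destruct (hwA z ltac:(lra) hNA) as [wA [hdwA [hwA0 eqA]]].
    destruct (hwB z ltac:(lra) hNB) as [wB [hdwB [hwB0 eqB]]].
    exists (wA - wB - c). split; [|apply deriv_within_of_lim, derivable_gap; auto].
    destruct (hgap z ltac:(lra) ltac:(apply Rabs_lt_between; lra)) as [hu [hbA hbB]].
    assert (c <= wA - wB); [|lra].
    apply (root_gap z wA wB (z * DA z - A z) (z * DB z - B z) (q z) (A x0 - B x0) K1 K2);
      auto; try lra. apply q_bounds; lra. }
  assert (c * x0 - c * y = - (c * (y - x0))) by ring. lra.
Qed.

(* At an interior positive maximum x0 of A - B, the function
   A - B - c/2 (y - x0)^2 would still be nondecreasing to the right of x0. *)
Lemma comparison A DA NA B DB NB : admissible A DA NA -> admissible B DB NB ->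
  A 2 = B 2 -> A 6 = B 6 -> forall x, 2 <= x <= 6 -> A x <= B x.
Proof.
  intros hA hB h2 h6 x1 hx1. apply Rnot_lt_le; intro hlt.
  destruct (positive_interior_max A DA NA B DB NB x1 hA hB h2 h6 hx1 hlt) as [x0 [hx0 [hm [hD hmax]]]].
  destruct (derivative_gap_grows A DA NA B DB NB x0 hA hB hx0 hD hm)
    as [c [d0 [hc [hd0 [hd06 hgap]]]]].
  destruct hA as [[hdA _] _]. destruct hB as [[hdB _] _].
  assert (hinc : A x0 - B x0 - c / 2 * (x0 - x0) ^ 2
                 <= A (x0 + d0) - B (x0 + d0) - c / 2 * (x0 + d0 - x0) ^ 2).
  { apply (nondecreasing_of_ae_deriv x0 (x0 + d0) (fun z => A z - B z - c / 2 * (z - x0) ^ 2)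
             (fun _ => False));
      [lra | apply null_empty | apply ac_on_tags_empty|].
    intros z hz _. exists (DA z - DB z - c * (z - x0)). split; [specialize (hgap z hz); lra|].
    apply (deriv_within_restrict 2 6); try lra.
    apply deriv_within_gap; [apply hdA | apply hdB]; unfold in_cc; lra. }
  specialize (hmax (x0 + d0) ltac:(lra)).
  assert (0 < c / 2 * (x0 + d0 - x0) ^ 2) by (apply Rmult_lt_0_compat; [lra | apply pow_lt; lra]).
  replace ((x0 - x0) ^ 2) with 0 in hinc by ring. lra.
Qed.

Theorem mainTheorem5 :
  exists Vlo Vhi : R -> R,
    convex_solution_in Vlo /\ convex_solution_in Vhi /\
    forall V, convex_solution_in V ->
      forall x, in_cc 2 6 x -> Vlo x <= V x /\ V x <= Vhi x.
Proof.
  exists V_star, V_star.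
  split; [apply V_star_convex_solution | split; [apply V_star_convex_solution|]].
  intros V hV x hx. destruct (convex_solution_admissible V hV) as [D [N [hadm [h2 h6]]]].
  split.
  - apply (comparison V_star D_star integer_points V D N V_star_admissible hadm); auto;
      [rewrite V_star_2 | rewrite V_star_6]; auto.
  - apply (comparison V D N V_star D_star integer_points hadm V_star_admissible); auto;
      [rewrite V_star_2 | rewrite V_star_6]; auto.
Qed.
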